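(* For $k\ge2$, let $\mathrm{SCHF}[2^k]$ denote the recursive spherical codes by Hopf foliations in dimension $2^k$ (see context), with cardinalities $M(2^k,d)$. Then the asymptotic center density $$\overline{\Delta}_c(\mathrm{SCHF}[2^k])=\lim_{d\to0}\frac{M(2^k,d)}{\mathbb{S}_{2^k}}\left(\frac d2\right)^{2^k-1}$$ equals $2^{\,1-3\cdot2^{k-2}}\,3^{-2^{k-3}}$.
   Context: $\mathbb{S}_m=\frac{m\pi^{m/2}}{\Gamma(1+m/2)}$ is the surface area of the unit sphere $S^{m-1}\subset\mathbb{R}^m$. Base case $\mathrm{SCHF}[4]$: for $d\in(0,2]$, with $\Delta\eta=2\arcsin(d/2)$, $t=\lfloor\pi/(4\arcsin(d/2))\rfloor$, $\eta_i=\pi/4+i\Delta\eta$ ($0\le i\le\lfloor t/2\rfloor$), $m(d,\eta)=\lfloor\pi/\arcsin(d/(2\cos\eta))\rfloor$ if $d\le2\cos\eta$ and $1$ otherwise, $n(d,\eta)=\max(2\lfloor\min\{n_1,n_2\}/2\rfloor,1)$ with $n_1=\lfloor\pi/\arcsin[((d^2/4)\csc^2\eta-\cot^2\eta\sin^2(\pi/2m))^{1/2}]\rfloor$ ($m=m(d,\eta)$) and $n_2=\lfloor2\pi/\arcsin(d/(2\sin\eta))\rfloor$ if $d\le2\sin\eta$, $1$ otherwise, the code consists of the points $(e^{\mathbf{i}(2\pi j/m_i+\pi k/m_i)}\cos\eta_i,e^{\mathbf{i}2\pi k/n_i}\sin\eta_i)\in\mathbb{C}^2\cong\mathbb{R}^4$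 ($0\le j<m_i=m(d,\eta_i)$, $0\le k<n_i=n(d,\eta_i)$) together with their images under swapping the two complex coordinates for $i\ge1$; so $M(4,d)=m_0n_0+2\sum_{i=1}^{\lfloor t/2\rfloor}m_in_i$. For $d>2$ (including $d=+\infty$) the code in any dimension is a single point. Recursive step: for $k\ge3$ and $d\in(0,2]$, with the same $\Delta\eta,t$ and $\eta_i=\pi/4+i\Delta\eta$ for $|i|\le\lfloor t/2\rfloor$, $\mathrm{SCHF}[2^k]$ with minimum distance $d$ is the union over $i$ of $\{(\cos\eta_i\mathbf{x};\sin\eta_i\mathbf{y})\}$ with $\mathbf{x}$ in $\mathrm{SCHF}[2^{k-1}]$ of minimum distance $d/\cos\eta_i$ and $\mathbf{y}$ in $\mathrm{SCHF}[2^{k-1}]$ of minimum distance $d/\sin\eta_i$ (with $d/0:=+\infty$); so $M(2^k,d)=\sum_{|i|\le\lfloor t/2\rfloor}M(2^{k-1},d/\cos\eta_i)M(2^{k-1},d/\sin\eta_i)$. *)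

From Stdlib Require Import Reals Lra List Factorial.
From Coquelicot Require Import Coquelicot.
Open Scope R_scope.

(* floor of a real, as a natural number (negative values are sent to 0;
   only nonnegative arguments occur in the construction for small d). *)
Definition nfloor (x : R) : nat := Z.to_nat (Int_part x).

Definition nsum (l : list nat) : nat := fold_right Nat.add 0%nat l.

Definition m_fn (d eta : R) : nat :=
  if Rle_dec d (2 * cos eta) then nfloor (PI / asin (d / (2 * cos eta))) else 1%nat.

Definition n_fn (d eta : R) : nat :=
  let m := m_fn d eta in
  let n1 := nfloor (PI / asin (sqrt ((d ^ 2 / 4) * / (sin eta) ^ 2
               - (cos eta / sin eta) ^ 2 * (sin (PI / (2 * INR m))) ^ 2))) in
  let n2 := if Rle_dec d (2 * sin eta)
            then nfloor (2 * PI / asin (d / (2 * sin eta))) else 1%nat in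
  Nat.max (2 * (Nat.min n1 n2 / 2)) 1.

Definition delta_eta (d : R) : R := 2 * asin (d / 2).
Definition t_par (d : R) : nat := nfloor (PI / (4 * asin (d / 2))).

Definition M4 (d : R) : nat :=
  let eta := fun i : nat => PI / 4 + INR i * delta_eta d in
  (m_fn d (eta 0%nat) * n_fn d (eta 0%nat)
   + 2 * nsum (map (fun i => m_fn d (eta i) * n_fn d (eta i))
                   (seq 1 (t_par d / 2))))%nat.

Definition divR (d x : R) : Rbar :=
  if Req_EM_T x 0 then p_infty else Finite (d / x).

(* Mr j d = M(2^(j+2), d); minimum distance d in (0,2] or larger / +oo.
   For d > 2 (or d = +oo) the code is a single point. *)
Fixpoint Mr (j : nat) (d : Rbar) : nat :=
  match d with
  | Finite x =>
    if Rlt_dec 0 x then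
      if Rle_dec x 2 then
        match j with
        | O => M4 x
        | S j' =>
          let T := (t_par x / 2)%nat in
          let eta := fun l : nat => PI / 4 + (INR l - INR T) * delta_eta x in
          nsum (map (fun l => Mr j' (divR x (cos (eta l))) * Mr j' (divR x (sin (eta l))))
                    (seq 0 (2 * T + 1)))%nat
        end
      else 1%nat
    else 1%nat
  | _ => 1%nat
  end.

Definition M_SCHF (k : nat) (d : R) : nat := Mr (k - 2) (Finite d).

(* Surface area S_m = m pi^(m/2) / Gamma(1 + m/2) of S^{m-1}, for EVEN m,
   where Gamma(1 + m/2) = (m/2)!.  Only used with m = 2^k, k >= 2. *)
Definition sphere_area_even (m : nat) : R :=
  INR m * PI ^ (m / 2) / INR (fact (m / 2)).

(* On the Hopf torus of latitude [eta] the code has [m n] points, where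
   [m ~ 2 pi cos eta / d] and [n ~ 4 pi sin eta / (sqrt 3 d)], so that
   [m n d^2 ~ kappa sin eta cos eta] with [kappa = 8 pi^2 / sqrt 3]; near the equator
   [cos eta = 0] both sides are merely [O(sqrt d)].  The latitudes form a grid of step
   [2 asin (d/2) = d + O(d^3)], hence [M(4,d) d^3] is a Riemann sum for
   [kappa * 2 * int_{pi/4}^{pi/2} sin cos = kappa / 2].  In dimension [2^(j+3)] the terms
   [M(2^(j+2), d / cos eta) M(2^(j+2), d / sin eta) d^(2p+1)], [p = 2^(j+2) - 1], are close to
   [A^2 d (sin eta cos eta)^p], whose grid sum tends to the Wallis-type integral
   [A^2 int_0^(pi/2) (sin x cos x)^p dx].  Every estimate carries an explicit
   [O(sqrt d)] error valid on all of [(0, 2]], which is what lets the induction evaluate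
   the previous dimension at the rescaled distances [d / cos eta] and [d / sin eta].
   The closed form of the limit follows from the Wallis formula and
   [S_(2n) = 2n pi^n / n!]. *)

From Pilot Require Import Defs.
From Stdlib Require Import Reals Lra Lia List Factorial ZArith.
From Coquelicot Require Import Coquelicot.
Open Scope R_scope.

Lemma PI_gt_3 : 3 < PI.
Proof. pose proof PI2_3_2; lra. Qed.

Lemma nfloor_spec (y : R) : 0 <= y -> y - 1 < INR (Defs.nfloor y) <= y.
Proof.
  intro Hy. unfold Defs.nfloor. destruct (base_Int_part y) as [H1 H2].
  assert (Hz : (0 <= Int_part y)%Z).
  { apply le_IZR. destruct (Rle_or_lt 0 (IZR (Int_part y))) as [h|h]; [lra|].
    assert (Int_part y < 0)%Z by (apply lt_IZR; lra).
    assert (IZR (Int_part y) <= -1) by (apply IZR_le; lia). lra. }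
  rewrite INR_IZR_INZ, Z2Nat.id by exact Hz. lra.
Qed.

Lemma INR_fact_S n : INR (fact (S n)) = INR (S n) * INR (fact n).
Proof. rewrite fact_simpl, mult_INR. reflexivity. Qed.

Lemma sin_cubic_bounds (a : R) : 0 <= a <= 2 -> a - a^3/6 <= sin a <= a.
Proof.
  intros Ha. pose proof PI_gt_3.
  destruct (SIN a ltac:(lra) ltac:(lra)) as [Hl Hu].
  assert (El : sin_lb a = a - a^3/6 + a^5/120 - a^7/5040).
  { unfold sin_lb, sin_approx. cbn [sum_f_R0]. unfold sin_term. cbn [Nat.mul Nat.add].
    rewrite !INR_fact_S. cbn [fact INR]. field. }
  assert (Eu : sin_ub a = a - a^3/6 + a^5/120 - a^7/5040 + a^9/362880).
  { unfold sin_ub, sin_approx. cbn [sum_f_R0]. unfold sin_term. cbn [Nat.mul Nat.add].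
    rewrite !INR_fact_S. cbn [fact INR]. field. }
  assert (Ha2 : a * a <= 4) by nra.
  assert (P3 : 0 <= a^3) by (apply pow_le; lra).
  assert (P5 : 0 <= a^5) by (apply pow_le; lra).
  assert (P7 : 0 <= a^7) by (apply pow_le; lra).
  assert (a^5 <= 4 * a^3) by (replace (a^5) with (a^3 * (a * a)) by ring; nra).
  assert (a^7 <= 4 * a^5) by (replace (a^7) with (a^5 * (a * a)) by ring; nra).
  assert (a^9 <= 4 * a^7) by (replace (a^9) with (a^7 * (a * a)) by ring; nra).
  lra.
Qed.

Lemma asin_nonneg (x : R) : 0 <= x <= 1 -> 0 <= asin x.
Proof.
  intros Hx. destruct (asin_bound x) as [Hl Hu].
  destruct (Rle_or_lt 0 (asin x)) as [h|h]; auto.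
  assert (sin (asin x) < 0) by (apply sin_lt_0_var; pose proof PI_gt_3; lra).
  rewrite sin_asin in H by lra. lra.
Qed.

Lemma asin_cubic_bounds (x : R) : 0 <= x <= 1 -> x <= asin x <= x + 5 * x^3.
Proof.
  intros Hx. pose proof (asin_nonneg x Hx) as Hy.
  destruct (asin_bound x) as [Hl Hu]. pose proof PI_4.
  set (y := asin x) in *.
  assert (Hs : sin y = x) by (apply sin_asin; lra).
  destruct (sin_cubic_bounds y ltac:(lra)) as [A B].
  assert (y <= 3 * x) by (assert (y * y <= 4) by nra; simpl in A; nra).
  assert (y^3 <= (3 * x)^3) by (apply pow_incr; lra).
  simpl in *; lra.
Qed.

(* Every count in the construction has the form [nfloor (a / asin x)] with [x]
   of the order of the minimal distance. *)
Lemma nfloor_div_asin (a x : R) : 0 < a -> 0 < x <= 1 ->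
  a - 5 * a * x^2 - x <= INR (Defs.nfloor (a / asin x)) * x <= a.
Proof.
  intros Ha Hx. destruct (asin_cubic_bounds x ltac:(lra)) as [Hlo Hhi].
  set (r := asin x) in *.
  destruct (nfloor_spec (a / r)) as [F1 F2].
  { apply Rlt_le, Rdiv_lt_0_compat; lra. }
  set (N := INR (Defs.nfloor (a / r))) in *.
  assert (E : a / r * x = a * (x / r)) by (field; lra).
  assert (Q1 : x / r <= 1) by (apply Rmult_le_reg_r with r; [lra|]; field_simplify; lra).
  assert (Q2 : 1 - 5 * x^2 <= x / r).
  { apply Rmult_le_reg_r with r; [lra|].
    replace (x / r * r) with x by (field; lra).
    assert (0 <= x^3) by (apply pow_le; lra). simpl in *; nra. }
  split.
  - assert ((a / r - 1) * x <= N * x) by (apply Rmult_le_compat_r; lra).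
    assert (a * (1 - 5 * x^2) <= a * (x / r)) by (apply Rmult_le_compat_l; lra).
    nra.
  - assert (N * x <= a / r * x) by (apply Rmult_le_compat_r; lra).
    assert (a * (x / r) <= a * 1) by (apply Rmult_le_compat_l; lra). lra.
Qed.

(** * Riemann sums and the Wallis integrals *)

Lemma lipschitz_of_derive_bound (F f : R -> R) (M : R) :
  (forall x, derivable_pt_lim F x (f x)) -> (forall x, Rabs (f x) <= M) ->
  forall a b, Rabs (F b - F a) <= M * Rabs (b - a).
Proof.
  intros HD HM a b.
  destruct (MVT_gen F a b f) as [c [_ Hc]].
  - intros x _. apply is_derive_Reals, HD.
  - intros x _. apply derivable_continuous_pt. exists (f x). apply HD.
  - rewrite Hc, Rabs_mult. apply Rmult_le_compat_r; [apply Rabs_pos | apply HM].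
Qed.

Lemma mvt_linear_error (F f : R -> R) (L : R) :
  (forall x, derivable_pt_lim F x (f x)) -> 0 <= L ->
  (forall x y, Rabs (f x - f y) <= L * Rabs (x - y)) ->
  forall a h, 0 <= h -> Rabs (F (a + h) - F a - f a * h) <= L * h^2.
Proof.
  intros HD HL Hf a h Hh.
  destruct (MVT_gen F a (a + h) f) as [c [Hc Ec]].
  - intros x _. apply is_derive_Reals, HD.
  - intros x _. apply derivable_continuous_pt. exists (f x). apply HD.
  - rewrite Ec. replace (f c * (a + h - a) - f a * h) with ((f c - f a) * h) by ring.
    rewrite Rabs_mult, (Rabs_right h) by lra.
    rewrite Rmin_left, Rmax_right in Hc by lra.
    assert (Rabs (c - a) <= h) by (rewrite Rabs_right; lra).
    pose proof (Hf c a).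
    apply Rle_trans with (L * Rabs (c - a) * h); [apply Rmult_le_compat_r; lra|].
    simpl. rewrite Rmult_1_r, <- Rmult_assoc.
    apply Rmult_le_compat_r; [lra|]. apply Rmult_le_compat_l; lra.
Qed.

Definition sumR (f : nat -> R) (l : list nat) : R := fold_right (fun i acc => f i + acc) 0 l.

Lemma INR_nsum_map (g : nat -> nat) l : INR (nsum (map g l)) = sumR (fun i => INR (g i)) l.
Proof. induction l as [|i l IH]; simpl; [reflexivity|]. rewrite plus_INR, IH. reflexivity. Qed.

Lemma sumR_ext f g l : (forall i, In i l -> f i = g i) -> sumR f l = sumR g l.
Proof.
  induction l as [|i l IH]; simpl; intros H; [reflexivity|].
  rewrite H, IH by auto. reflexivity.
Qed.

Lemma sumR_scal a f l : sumR (fun i => a * f i) l = a * sumR f l.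
Proof. induction l as [|i l IH]; simpl; [ring|]. rewrite IH. ring. Qed.

Lemma sumR_dist f g l C : (forall i, In i l -> Rabs (f i - g i) <= C) ->
  Rabs (sumR f l - sumR g l) <= INR (length l) * C.
Proof.
  induction l as [|i l IH]; intros H; simpl sumR.
  - rewrite Rminus_0_r, Rabs_R0. simpl. lra.
  - replace (f i + sumR f l - (g i + sumR g l)) with ((f i - g i) + (sumR f l - sumR g l)) by ring.
    eapply Rle_trans; [apply Rabs_triang|].
    pose proof (H i (in_eq i l)). pose proof (IH (fun k Hk => H k (in_cons i k l Hk))).
    simpl length. rewrite S_INR. lra.
Qed.

Lemma sumR_abs_le f l C : (forall i, In i l -> Rabs (f i) <= C) ->
  Rabs (sumR f l) <= INR (length l) * C.
Proof.
  induction l as [|i l IH]; intros H; simpl sumR.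
  - rewrite Rabs_R0. simpl. lra.
  - eapply Rle_trans; [apply Rabs_triang|].
    pose proof (H i (in_eq i l)). pose proof (IH (fun k Hk => H k (in_cons i k l Hk))).
    simpl length. rewrite S_INR. lra.
Qed.

Lemma sumR_telescope (F : R -> R) a h s N :
  sumR (fun l => F (a + INR (S l) * h) - F (a + INR l * h)) (seq s N)
  = F (a + INR (s + N) * h) - F (a + INR s * h).
Proof.
  revert s. induction N as [|N IH]; intro s; cbn [seq sumR fold_right].
  - rewrite Nat.add_0_r. ring.
  - fold (sumR (fun l => F (a + INR (S l) * h) - F (a + INR l * h)) (seq (S s) N)).
    rewrite IH. replace (S s + N)%nat with (s + S N)%nat by lia. ring.
Qed.

Lemma riemann_sum_error (F f : R -> R) (L a h : R) (s N : nat) :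
  (forall x, derivable_pt_lim F x (f x)) -> 0 <= L ->
  (forall x y, Rabs (f x - f y) <= L * Rabs (x - y)) -> 0 <= h ->
  Rabs (h * sumR (fun l => f (a + INR l * h)) (seq s N)
        - (F (a + INR (s + N) * h) - F (a + INR s * h))) <= INR N * (L * h^2).
Proof.
  intros HD HL Hf Hh. rewrite <- sumR_telescope, <- sumR_scal.
  replace (INR N) with (INR (length (seq s N))) by now rewrite length_seq.
  apply sumR_dist. intros i _.
  replace (a + INR (S i) * h) with (a + INR i * h + h) by (rewrite S_INR; ring).
  rewrite <- Rabs_Ropp.
  replace (- (h * f (a + INR i * h) - (F (a + INR i * h + h) - F (a + INR i * h))))
    with (F (a + INR i * h + h) - F (a + INR i * h) - f (a + INR i * h) * h) by ring.
  now apply mvt_linear_error.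
Qed.

(* The reduction formula for [∫ sin^(2q+3)] in terms of [∫ sin^(2q+1)]. *)
Fixpoint sin_pow_prim (q : nat) (u : R) : R :=
  match q with
  | O => - cos u
  | S q' => - (sin u ^ (2*q'+2) * cos u) / INR (2*q'+3)
            + INR (2*q'+2) / INR (2*q'+3) * sin_pow_prim q' u
  end.

Lemma sin_pow_prim_derive q u : is_derive (sin_pow_prim q) u (sin u ^ (2*q+1)).
Proof.
  revert u; induction q as [|q IH]; intro u; simpl sin_pow_prim.
  - auto_derive; auto. simpl. ring.
  - assert (H3 : INR (2*q+3) <> 0) by (apply not_0_INR; lia).
    replace (sin u ^ (2 * S q + 1)) with
      (- (INR (2*q+2) * sin u ^ (2*q+1) * cos u * cos u - sin u ^ (2*q+2) * sin u) / INR (2*q+3)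
       + INR (2*q+2) / INR (2*q+3) * sin u ^ (2*q+1)).
    + apply (is_derive_plus (fun u => - (sin u ^ (2*q+2) * cos u) / INR (2*q+3))
               (fun u => INR (2*q+2) / INR (2*q+3) * sin_pow_prim q u)).
      * auto_derive; auto. replace (q + (q + 0))%nat with (2*q)%nat by lia.
        replace (Init.Nat.pred (2*q+2)) with (2*q+1)%nat by lia. unfold Rdiv. ring.
      * apply is_derive_scal, IH.
    + replace (2 * S q + 1)%nat with (2*q+1+2)%nat by lia.
      replace (2*q+2)%nat with (2*q+1+1)%nat by lia.
      rewrite !pow_add. generalize (sin u ^ (2*q+1)); intro P.
      assert (Hc : cos u * cos u = 1 - sin u * sin u)
        by (pose proof (sin2_cos2 u); unfold Rsqr in *; lra).
      rewrite !plus_INR, !mult_INR in *. simpl in *.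
      apply Rminus_diag_uniq. field_simplify; [|lra].
      replace (cos u ^ 2) with (1 - sin u * sin u) by (simpl; lra). field. lra.
Qed.

Definition wallis (q : nat) : R := sin_pow_prim q PI - sin_pow_prim q 0.

Lemma wallis_succ q : wallis (S q) = INR (2*q+2) / INR (2*q+3) * wallis q.
Proof.
  unfold wallis. simpl sin_pow_prim. rewrite sin_PI, cos_PI, sin_0, cos_0.
  replace (q + (q + 0))%nat with (2*q)%nat by lia. rewrite !pow_i by lia. unfold Rdiv. ring.
Qed.

Lemma wallis_closed q : wallis q = 2 * 4^q * INR (fact q) ^ 2 / INR (fact (2*q+1)).
Proof.
  induction q as [|q IH].
  - unfold wallis. simpl. rewrite cos_PI, cos_0. field.
  - rewrite wallis_succ, IH.
    replace (2 * S q + 1)%nat with (S (S (2*q+1))) by lia.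
    rewrite !INR_fact_S.
    pose proof (INR_fact_neq_0 q). pose proof (INR_fact_neq_0 (2*q+1)).
    rewrite !S_INR, !plus_INR, !mult_INR. simpl.
    field. repeat split; try assumption; pose proof (pos_INR q); lra.
Qed.

Definition sc_pow (q : nat) (x : R) : R := (sin x * cos x) ^ (2*q+1).
Definition sc_pow_prim (q : nat) (x : R) : R := sin_pow_prim q (2*x) / 2^(2*q+2).
Definition sc_pow_int (q : nat) : R := wallis q / 2^(2*q+2).

Lemma sc_pow_0 x : sc_pow 0 x = sin x * cos x.
Proof. unfold sc_pow. simpl. ring. Qed.

Lemma sc_pow_prim_derive q x : derivable_pt_lim (sc_pow_prim q) x (sc_pow q x).
Proof.
  apply is_derive_Reals. unfold sc_pow_prim, sc_pow.
  apply (is_derive_ext (fun x => / 2^(2*q+2) * sin_pow_prim q (2*x))).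
  { intro t. unfold Rdiv. apply Rmult_comm. }
  replace ((sin x * cos x) ^ (2 * q + 1)) with (/ 2^(2*q+2) * (2 * sin (2*x) ^ (2*q+1))).
  - apply is_derive_scal, (is_derive_comp (sin_pow_prim q) (fun x => 2 * x)).
    + apply sin_pow_prim_derive.
    + auto_derive; auto. ring.
  - rewrite sin_2a. replace (2*q+2)%nat with (S (2*q+1)) by lia.
    rewrite !Rpow_mult_distr. simpl. field. apply pow_nonzero. lra.
Qed.

Lemma sc_pow_int_eq q : sc_pow_int q = sc_pow_prim q (PI/2) - sc_pow_prim q 0.
Proof.
  unfold sc_pow_int, sc_pow_prim, wallis.
  replace (2 * (PI/2)) with PI by field. rewrite Rmult_0_r.
  field. apply pow_nonzero; lra.
Qed.

Lemma sin_cos_abs_le_1 x : Rabs (sin x * cos x) <= 1.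
Proof.
  rewrite Rabs_mult. pose proof (Rabs_pos (sin x)). pose proof (Rabs_pos (cos x)).
  assert (Rabs (sin x) <= 1) by (apply Rabs_le, SIN_bound).
  assert (Rabs (cos x) <= 1) by (apply Rabs_le, COS_bound). nra.
Qed.

Lemma pow_abs_le_1 (u : R) n : Rabs u <= 1 -> Rabs (u ^ n) <= 1.
Proof.
  intro H. rewrite <- RPow_abs. induction n; simpl; [lra|].
  pose proof (pow_le (Rabs u) n (Rabs_pos u)). nra.
Qed.

Lemma sc_pow_abs_le_1 q x : Rabs (sc_pow q x) <= 1.
Proof. apply pow_abs_le_1, sin_cos_abs_le_1. Qed.

Lemma pow_lipschitz (u v : R) n : Rabs u <= 1 -> Rabs v <= 1 ->
  Rabs (u ^ n - v ^ n) <= INR n * Rabs (u - v).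
Proof.
  intros Hu Hv. induction n as [|n IH].
  - simpl. rewrite Rminus_diag, Rabs_R0. lra.
  - replace (u ^ S n - v ^ S n) with (u * (u^n - v^n) + v^n * (u - v)) by (simpl; ring).
    rewrite S_INR. eapply Rle_trans; [apply Rabs_triang|].
    rewrite !Rabs_mult. pose proof (pow_abs_le_1 v n Hv). pose proof (Rabs_pos u).
    pose proof (Rabs_pos (u^n - v^n)). pose proof (Rabs_pos (u - v)). pose proof (Rabs_pos (v^n)).
    nra.
Qed.

Lemma sin_cos_lipschitz x y : Rabs (sin x * cos x - sin y * cos y) <= Rabs (x - y).
Proof.
  rewrite <- (Rmult_1_l (Rabs (x - y))).
  apply (lipschitz_of_derive_bound (fun x => sin x * cos x)
           (fun x => cos x * cos x - sin x * sin x)).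
  - intro t. apply is_derive_Reals. auto_derive; auto. ring.
  - intro t. pose proof (sin2_cos2 t). unfold Rsqr in *. apply Rabs_le.
    pose proof (Rle_0_sqr (sin t)); pose proof (Rle_0_sqr (cos t)); unfold Rsqr in *. lra.
Qed.

Lemma sc_pow_lipschitz q x y : Rabs (sc_pow q x - sc_pow q y) <= INR (2*q+1) * Rabs (x - y).
Proof.
  unfold sc_pow. eapply Rle_trans; [apply pow_lipschitz; apply sin_cos_abs_le_1|].
  apply Rmult_le_compat_l; [apply pos_INR | apply sin_cos_lipschitz].
Qed.

Lemma sc_pow_prim_lipschitz q a b : Rabs (sc_pow_prim q b - sc_pow_prim q a) <= Rabs (b - a).
Proof.
  rewrite <- (Rmult_1_l (Rabs (b - a))).
  apply (lipschitz_of_derive_bound _ (sc_pow q));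
    [apply sc_pow_prim_derive | apply sc_pow_abs_le_1].
Qed.

Lemma sc_pow_riemann q (a h alpha beta : R) (s N : nat) : 0 <= h ->
  Rabs (a + INR s * h - alpha) <= h -> Rabs (a + INR (s + N) * h - beta) <= h ->
  Rabs (h * sumR (fun l => sc_pow q (a + INR l * h)) (seq s N)
        - (sc_pow_prim q beta - sc_pow_prim q alpha))
  <= INR (2*q+1) * (INR N * h) * h + 2 * h.
Proof.
  intros Hh Ha Hb.
  pose proof (riemann_sum_error (sc_pow_prim q) (sc_pow q) (INR (2*q+1)) a h s N
                (sc_pow_prim_derive q) (pos_INR _) (sc_pow_lipschitz q) Hh) as E.
  pose proof (sc_pow_prim_lipschitz q beta (a + INR (s + N) * h)).
  pose proof (sc_pow_prim_lipschitz q alpha (a + INR s * h)).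
  set (S := h * sumR _ _) in *.
  set (Fb := sc_pow_prim q (a + INR (s + N) * h)) in *.
  set (Fa := sc_pow_prim q (a + INR s * h)) in *.
  replace (S - (sc_pow_prim q beta - sc_pow_prim q alpha))
    with ((S - (Fb - Fa)) + (Fb - sc_pow_prim q beta) - (Fa - sc_pow_prim q alpha)) by ring.
  unfold Rminus at 1. eapply Rle_trans; [apply Rabs_triang|]. rewrite Rabs_Ropp.
  eapply Rle_trans; [apply Rplus_le_compat_r, Rabs_triang|].
  replace (INR (2*q+1) * (INR N * h) * h) with (INR N * (INR (2*q+1) * h^2)) by ring.
  lra.
Qed.

(** * The grid of latitudes *)

Lemma delta_eta_bounds d : 0 < d <= 2 ->
  d <= delta_eta d <= d + 5/4 * d^3 /\ delta_eta d <= PI /\ delta_eta d <= 6 * d.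
Proof.
  intros Hd. unfold delta_eta.
  destruct (asin_cubic_bounds (d/2) ltac:(lra)) as [A B].
  pose proof (asin_bound (d/2)).
  assert (d^3 <= 4 * d) by (simpl; nra).
  replace ((d/2)^3) with (d^3/8) in B by (simpl; field).
  repeat split; lra.
Qed.

Lemma half_count_bounds d : 0 < d <= 2 ->
  INR (t_par d / 2) * delta_eta d <= PI/4 < (INR (t_par d / 2) + 1) * delta_eta d.
Proof.
  intros Hd. destruct (delta_eta_bounds d Hd) as [[H1 _] _].
  set (h := delta_eta d) in *. set (T := (t_par d / 2)%nat).
  assert (E : t_par d = Defs.nfloor (PI / (2 * h))).
  { assert (Hh : 0 < h) by lra. unfold h, delta_eta in Hh |- *.
    unfold t_par. f_equal. field. lra. }
  destruct (nfloor_spec (PI / (2 * h))) as [F1 F2].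
  { apply Rlt_le, Rdiv_lt_0_compat; pose proof PI_gt_3; lra. }
  rewrite <- E in F1, F2.
  assert (Ht : (2 * T <= t_par d <= 2 * T + 1)%nat).
  { unfold T. pose proof (Nat.div_mod (t_par d) 2 ltac:(lia)).
    pose proof (Nat.mod_upper_bound (t_par d) 2 ltac:(lia)). lia. }
  destruct Ht as [Ha Hb]. apply le_INR in Ha, Hb.
  rewrite plus_INR, !mult_INR in *. simpl in Ha, Hb.
  assert (Q : PI / (2 * h) * h = PI / 2) by (field; lra).
  split; nra.
Qed.

Definition half_grid_sum (T : nat) (phi : nat -> R) : R := phi O + 2 * sumR phi (seq 1 T).

Lemma half_grid_sum_dist T phi psi C : (forall i, (i <= T)%nat -> Rabs (phi i - psi i) <= C) ->
  Rabs (half_grid_sum T phi - half_grid_sum T psi) <= (2 * INR T + 1) * C.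
Proof.
  intros H. unfold half_grid_sum.
  assert (HS : Rabs (sumR phi (seq 1 T) - sumR psi (seq 1 T)) <= INR T * C).
  { replace (INR T) with (INR (length (seq 1 T))) by now rewrite length_seq.
    apply sumR_dist.
    intros i Hi. apply in_seq in Hi. apply H. lia. }
  pose proof (H O (Nat.le_0_l T)).
  replace (phi O + 2 * sumR phi (seq 1 T) - (psi O + 2 * sumR psi (seq 1 T)))
    with ((phi O - psi O) + 2 * (sumR phi (seq 1 T) - sumR psi (seq 1 T))) by ring.
  eapply Rle_trans; [apply Rabs_triang|]. rewrite Rabs_mult, (Rabs_right 2) by lra.
  replace ((2 * INR T + 1) * C) with (2 * (INR T * C) + C) by ring. lra.
Qed.

(* Passing from the grid step [delta_eta d] to the minimal distance [d] costs
   only [O(d)], because the two differ by [O(d^3)]. *)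
Lemma riemann_step_change (d h S I C N : R) : 0 < d <= 2 ->
  d <= h <= d + 5/4 * d^3 -> h <= 6 * d -> 0 <= C -> Rabs (h * S - I) <= C * h ->
  Rabs S <= N -> N * d <= 6 -> Rabs (d * S - I) <= (6 * C + 15) * d.
Proof.
  intros Hd Hh H6 HC HI HS HN.
  replace (d * S - I) with ((h * S - I) - (h - d) * S) by ring.
  unfold Rminus at 1. eapply Rle_trans; [apply Rabs_triang|].
  rewrite Rabs_Ropp, Rabs_mult, (Rabs_right (h - d)) by lra.
  assert ((h - d) * Rabs S <= 5/4 * d^3 * N) by (apply Rmult_le_compat; try lra; apply Rabs_pos).
  assert (5/4 * d^3 * N = 5/4 * (d * d) * (N * d)) by (simpl; ring).
  assert (C * h <= C * (6 * d)) by (apply Rmult_le_compat_l; lra).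
  assert (d * d <= 2 * d) by nra.
  assert (0 <= N) by (pose proof (Rabs_pos S); lra).
  nra.
Qed.

Lemma full_grid_riemann q : exists K, forall d, 0 < d <= 2 ->
  Rabs (d * sumR (fun l => sc_pow q (PI/4 + (INR l - INR (t_par d / 2)) * delta_eta d))
                 (seq 0 (2 * (t_par d / 2) + 1)) - sc_pow_int q) <= K * d.
Proof.
  set (C := 6 * INR (2*q+1) + 2).
  exists (6 * C + 15). intros d Hd.
  destruct (delta_eta_bounds d Hd) as [Hh [HP H6]].
  pose proof (half_count_bounds d Hd) as HT.
  set (h := delta_eta d) in *. set (T := (t_par d / 2)%nat) in *.
  set (a := PI/4 - INR T * h).
  assert (EN : INR (2*T+1) = 2 * INR T + 1) by (rewrite plus_INR, mult_INR; simpl; ring).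
  set (S := sumR _ _).
  assert (ES : S = sumR (fun l => sc_pow q (a + INR l * h)) (seq 0 (2*T+1))).
  { apply sumR_ext. intros l _. unfold a. f_equal. ring. }
  assert (HI : Rabs (h * S - sc_pow_int q) <= C * h).
  { rewrite ES, sc_pow_int_eq.
    eapply Rle_trans; [apply (sc_pow_riemann q a h 0 (PI/2) 0 (2*T+1)); try lra|].
    - unfold a. simpl. apply Rabs_le. lra.
    - unfold a. rewrite Nat.add_0_l, EN. apply Rabs_le. lra.
    - rewrite EN. unfold C.
      assert ((2 * INR T + 1) * h <= 6) by (pose proof PI_4; lra).
      assert (INR (2*q+1) * ((2 * INR T + 1) * h) <= INR (2*q+1) * 6)
        by (apply Rmult_le_compat_l; [apply pos_INR | lra]).
      nra. }
  assert (HS : Rabs S <= 2 * INR T + 1).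
  { rewrite <- EN, <- Rmult_1_r. unfold S.
    replace (INR (2*T+1)) with (INR (length (seq 0 (2*T+1)))) by now rewrite length_seq.
    apply sumR_abs_le. intros. apply sc_pow_abs_le_1. }
  apply (riemann_step_change d h S _ C (2 * INR T + 1)); try lra.
  - unfold C. pose proof (pos_INR (2*q+1)). lra.
  - assert ((2 * INR T + 1) * d <= (2 * INR T + 1) * h)
      by (apply Rmult_le_compat_l; [pose proof (pos_INR T) |]; lra).
    pose proof PI_4. lra.
Qed.

Lemma half_grid_riemann : exists K, forall d, 0 < d <= 2 ->
  Rabs (d * half_grid_sum (t_par d / 2) (fun i => sc_pow 0 (PI/4 + INR i * delta_eta d)) - 1/2)
  <= K * d.
Proof.
  exists (1 + 2 * (6 * 3 + 15)). intros d Hd.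
  destruct (delta_eta_bounds d Hd) as [Hh [HP H6]].
  pose proof (half_count_bounds d Hd) as HT.
  set (h := delta_eta d) in *. set (T := (t_par d / 2)%nat) in *.
  unfold half_grid_sum. set (S := sumR _ (seq 1 T)).
  assert (F1 : sc_pow_prim 0 (PI/2) = 1/4).
  { unfold sc_pow_prim. simpl. replace (2 * (PI/2)) with PI by field. rewrite cos_PI. field. }
  assert (F2 : sc_pow_prim 0 (PI/4) = 0).
  { unfold sc_pow_prim. simpl. replace (2 * (PI/4)) with (PI/2) by field. rewrite cos_PI2. field. }
  assert (HI : Rabs (h * S - 1/4) <= 3 * h).
  { replace (1/4) with (sc_pow_prim 0 (PI/2) - sc_pow_prim 0 (PI/4)) by lra.
    eapply Rle_trans; [apply (sc_pow_riemann 0 (PI/4) h (PI/4) (PI/2) 1 T); try lra|].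
    - simpl. apply Rabs_le. lra.
    - rewrite plus_INR. simpl. apply Rabs_le. lra.
    - simpl. pose proof PI_4. nra. }
  assert (HS : Rabs S <= INR T).
  { rewrite <- Rmult_1_r. unfold S.
    replace (INR T) with (INR (length (seq 1 T))) by now rewrite length_seq.
    apply sumR_abs_le. intros. apply sc_pow_abs_le_1. }
  assert (HdS : Rabs (d * S - 1/4) <= (6 * 3 + 15) * d).
  { apply (riemann_step_change d h S _ 3 (INR T)); try lra.
    assert (INR T * d <= INR T * h) by (apply Rmult_le_compat_l; [apply pos_INR | lra]).
    pose proof PI_4. lra. }
  pose proof (sc_pow_abs_le_1 0 (PI/4 + INR 0 * h)).
  replace (d * (sc_pow 0 (PI/4 + INR 0 * h) + 2 * S) - 1/2)
    with (d * sc_pow 0 (PI/4 + INR 0 * h) + 2 * (d * S - 1/4)) by field.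
  eapply Rle_trans; [apply Rabs_triang|].
  rewrite !Rabs_mult, (Rabs_right d), (Rabs_right 2) by lra. nra.
Qed.

(** * Lattice sizes on a Hopf torus *)

Lemma sqrt3_bounds : sqrt 3 * sqrt 3 = 3 /\ 173/100 <= sqrt 3 <= 174/100.
Proof.
  assert (E : sqrt 3 * sqrt 3 = 3) by (apply sqrt_sqrt; lra).
  pose proof (sqrt_pos 3). split; [exact E | nra].
Qed.

Lemma le_2_sqrt d : 0 <= d <= 2 -> d <= 2 * sqrt d.
Proof.
  intros Hd. pose proof (sqrt_sqrt d ltac:(lra)). pose proof (sqrt_pos d). nra.
Qed.

Lemma div_sqrt3_bounds y : 0 <= y -> 57/100 * y <= y / sqrt 3 <= 6/10 * y.
Proof.
  intros Hy. destruct sqrt3_bounds as [_ B3].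
  split; apply Rmult_le_reg_r with (sqrt 3); try lra;
    replace (y / sqrt 3 * sqrt 3) with y by (field; lra); nra.
Qed.

Lemma hopf_angle_facts e : PI/4 <= e <= PI/2 ->
  0 <= cos e <= 1 /\ 7/10 <= sin e <= 1 /\ 1/2 <= sin e ^ 2.
Proof.
  intros He. pose proof PI_gt_3.
  assert (Hc0 : 0 <= cos e) by (apply cos_ge_0; lra).
  assert (Hs0 : 0 < sin e) by (apply sin_gt_0; lra).
  assert (Hc : cos e <= 1 / sqrt 2).
  { rewrite <- cos_PI4. destruct (Req_dec e (PI/4)) as [->|E]; [lra|].
    apply Rlt_le, cos_decreasing_1; lra. }
  assert (E2 : sqrt 2 * sqrt 2 = 2) by (apply sqrt_sqrt; lra).
  assert (P2 : 0 < sqrt 2) by (apply sqrt_lt_R0; lra).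
  assert (Hc2 : cos e * cos e <= 1/2).
  { assert (cos e * cos e <= (1 / sqrt 2) * (1 / sqrt 2)) by (apply Rmult_le_compat; lra).
    replace ((1 / sqrt 2) * (1 / sqrt 2)) with (1 / (sqrt 2 * sqrt 2)) in H0 by (field; lra).
    rewrite E2 in H0. lra. }
  pose proof (sin2_cos2 e). unfold Rsqr in *. pose proof (SIN_bound e). pose proof (COS_bound e).
  repeat split; simpl; nra.
Qed.

Lemma m_fn_upper d e : 0 < d -> 0 <= cos e -> INR (m_fn d e) * d <= 2 * PI * cos e + d.
Proof.
  intros Hd Hc. pose proof PI_gt_3. unfold m_fn. destruct Rle_dec as [h|h].
  - set (x := d / (2 * cos e)).
    assert (Hx : 0 < x <= 1).
    { unfold x. split; [apply Rdiv_lt_0_compat; lra|].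
      apply Rmult_le_reg_r with (2 * cos e); [lra|]. field_simplify; lra. }
    destruct (nfloor_div_asin PI x ltac:(lra) Hx) as [_ Hm].
    replace (INR (Defs.nfloor (PI / asin x)) * d)
      with (2 * cos e * (INR (Defs.nfloor (PI / asin x)) * x)) by (unfold x; field; lra).
    nra.
  - simpl. nra.
Qed.

Lemma n_fn_upper d e : 0 < d <= 2 -> 0 < sin e <= 1 -> INR (n_fn d e) * d <= 4 * PI + d.
Proof.
  intros Hd Hs. pose proof PI_gt_3. unfold n_fn. cbv zeta.
  set (n1 := Defs.nfloor _). set (n2 := if Rle_dec d (2 * sin e) then _ else _).
  assert (Hn2 : INR n2 * d <= 4 * PI).
  { unfold n2. destruct Rle_dec as [h|h]; [|simpl; lra].
    set (y := d / (2 * sin e)).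
    assert (Hy : 0 < y <= 1).
    { unfold y. split; [apply Rdiv_lt_0_compat; lra|].
      apply Rmult_le_reg_r with (2 * sin e); [lra|]. field_simplify; lra. }
    destruct (nfloor_div_asin (2 * PI) y ltac:(lra) Hy) as [_ Hm].
    replace (INR (Defs.nfloor (2 * PI / asin y)) * d)
      with (2 * sin e * (INR (Defs.nfloor (2 * PI / asin y)) * y)) by (unfold y; field; lra).
    nra. }
  assert (Hn : (Nat.max (2 * (Nat.min n1 n2 / 2)) 1 <= n2 + 1)%nat)
    by (pose proof (Nat.Div0.mul_div_le (Nat.min n1 n2) 2); lia).
  apply le_INR in Hn. rewrite plus_INR in Hn. change (INR 1) with 1 in Hn.
  apply Rmult_le_compat_r with (r := d) in Hn; [|lra].
  rewrite Rmult_plus_distr_r, Rmult_1_l in Hn. lra.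
Qed.

Lemma m_fn_estimate d e : 0 < d -> 0 < cos e -> d / (2 * cos e) <= 1/200 ->
  PI - 2 * (d / (2 * cos e)) <= INR (m_fn d e) * (d / (2 * cos e)) <= PI.
Proof.
  intros Hd Hc Hx. pose proof PI_4.
  set (x := d / (2 * cos e)) in *.
  assert (Hx0 : 0 < x) by (apply Rdiv_lt_0_compat; lra).
  unfold m_fn. fold x. destruct Rle_dec as [_|h].
  - destruct (nfloor_div_asin PI x ltac:(pose proof PI_gt_3; lra) ltac:(lra)) as [Hlo Hhi].
    split; [|exact Hhi].
    assert (PI * x <= 1/50) by nra.
    assert (5 * PI * x^2 <= x) by (replace (5 * PI * x^2) with (5 * (PI * x) * x) by ring; nra).
    lra.
  - exfalso. apply h. apply Rmult_le_reg_r with (/ (2 * cos e)).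
    + apply Rinv_0_lt_compat. lra.
    + rewrite Rinv_r by lra. unfold x, Rdiv in Hx. lra.
Qed.

Lemma sin_pi_div_2m_estimate x M : 0 < x <= 1/200 -> PI - 2 * x <= M * x <= PI ->
  Rabs (sin (PI / (2 * M)) - x / 2) <= x^2.
Proof.
  intros Hx HM. pose proof PI_gt_3.
  assert (HMx : 2 <= M * x) by lra.
  assert (HM0 : 0 < M) by nra.
  set (z := PI / (2 * M)).
  assert (Ez : z - x / 2 = (PI - M * x) / (2 * M)) by (unfold z; field; lra).
  assert (Z1 : 0 <= z - x / 2).
  { rewrite Ez. apply Rmult_le_pos; [lra | apply Rlt_le, Rinv_0_lt_compat; lra]. }
  assert (Z2 : z - x / 2 <= x^2 / 2).
  { rewrite Ez. apply Rmult_le_reg_r with (2 * M); [lra|].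
    replace ((PI - M * x) / (2 * M) * (2 * M)) with (PI - M * x) by (field; lra).
    simpl. nra. }
  destruct (sin_cubic_bounds z ltac:(simpl in Z2; nra)) as [S1 S2].
  assert (z^3 <= x^2).
  { assert (z <= x) by (simpl in Z2; nra).
    assert (z^3 <= x^3) by (apply pow_incr; lra). simpl in *. nra. }
  apply Rabs_le. split; lra.
Qed.

(* With [c = cos eta], [s = sin eta], [d = 2 c x] and [sg = sin (pi/2m)], the first term is
   the squared radius [(d^2/4) csc^2 eta - cot^2 eta sin^2 (pi/2m)] in the definition of [n1];
   it is close to [3 d^2 / (16 sin^2 eta)] because [sg] is close to [x / 2]. *)
Lemma hopf_radius_sq_estimate (c s x sg : R) : 0 < c -> 1/2 <= s^2 -> 0 < x <= 1 ->
  Rabs (sg - x / 2) <= x^2 ->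
  Rabs (((2 * c * x)^2 / 4 * / s^2 - (c / s)^2 * sg^2) - 3 * (2 * c * x)^2 / (16 * s^2))
  <= (2 * c * x)^2 * x.
Proof.
  intros Hc Hs Hx He. assert (Hs0 : s <> 0) by (intro; subst; simpl in Hs; lra).
  replace (((2 * c * x)^2 / 4 * / s^2 - (c / s)^2 * sg^2) - 3 * (2 * c * x)^2 / (16 * s^2))
    with (- (c^2 / s^2) * ((sg - x / 2) * (x + (sg - x / 2)))) by (field; auto).
  set (e := sg - x / 2) in *.
  assert (Hc2 : 0 <= c^2 / s^2)
    by (apply Rmult_le_pos; [apply pow2_ge_0 | apply Rlt_le, Rinv_0_lt_compat; lra]).
  rewrite Rabs_mult, Rabs_Ropp, (Rabs_right (c^2 / s^2)) by lra.
  assert (He2 : Rabs (e * (x + e)) <= 2 * x^3).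
  { rewrite Rabs_mult. apply Rabs_le_between in He. simpl in *.
    assert (Rabs (x + e) <= 2 * x) by (apply Rabs_le; nra).
    assert (Rabs e * Rabs (x + e) <= x * x * (2 * x))
      by (apply Rmult_le_compat; try apply Rabs_pos; try lra; apply Rabs_le; lra).
    lra. }
  assert (Hcs : c^2 / s^2 <= 2 * c^2).
  { unfold Rdiv. rewrite Rmult_comm. apply Rmult_le_compat_r; [apply pow2_ge_0|].
    replace 2 with (/ (1/2)) by field. apply Rinv_le_contravar; lra. }
  replace ((2 * c * x)^2 * x) with (2 * c^2 * (2 * x^3)) by ring.
  apply Rmult_le_compat; try lra. apply Rabs_pos.
Qed.

Lemma sqrt_near_sq (Q w0 eps : R) : 0 < w0 -> 0 <= Q -> Rabs (Q - w0^2) <= eps ->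
  Rabs (sqrt Q - w0) <= eps / w0.
Proof.
  intros Hw HQ HE. pose proof (sqrt_pos Q). pose proof (sqrt_sqrt Q HQ).
  replace (sqrt Q - w0) with ((sqrt Q * sqrt Q - w0^2) / (sqrt Q + w0)) by (field; lra).
  rewrite H0.
  unfold Rdiv. rewrite Rabs_mult, Rabs_inv, (Rabs_right (sqrt Q + w0)) by lra.
  apply Rmult_le_compat; try lra.
  - apply Rabs_pos.
  - apply Rlt_le, Rinv_0_lt_compat. lra.
  - apply Rinv_le_contravar; lra.
Qed.

Lemma hopf_radius_bounds (s d : R) : 7/10 <= s <= 1 -> 0 < d ->
  43/100 * d <= sqrt 3 * d / (4 * s) <= 63/100 * d.
Proof.
  intros Hs Hd. destruct sqrt3_bounds as [_ B3].
  split; apply Rmult_le_reg_r with (4 * s); try lra;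
    replace (sqrt 3 * d / (4 * s) * (4 * s)) with (sqrt 3 * d) by (field; lra); nra.
Qed.

Lemma n1_estimate (s d x w : R) : 7/10 <= s <= 1 -> 0 < d <= 1/10000 -> 0 < x <= 1/200 ->
  Rabs (w - sqrt 3 * d / (4 * s)) <= 3 * d * x ->
  Rabs (INR (Defs.nfloor (PI / asin w)) * d - 4 * PI * s / sqrt 3) <= 70 * x + 2 * d.
Proof.
  intros Hs Hd Hx Hw. pose proof PI_gt_3. pose proof PI_4.
  pose proof (hopf_radius_bounds s d Hs ltac:(lra)) as Hw0.
  destruct sqrt3_bounds as [_ B3].
  set (w0 := sqrt 3 * d / (4 * s)) in *.
  apply Rabs_le_between in Hw.
  assert (d * x <= d * (1/200)) by (apply Rmult_le_compat_l; lra).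
  assert (Hwb : 41/100 * d <= w <= 65/100 * d) by lra.
  destruct (nfloor_div_asin PI w ltac:(lra) ltac:(lra)) as [N1 N2].
  set (N := INR (Defs.nfloor (PI / asin w))) in *.
  replace (N * d - 4 * PI * s / sqrt 3)
    with ((N * w - PI) * (d / w) + PI * d * (w0 - w) / (w * w0)) by (unfold w0; field; lra).
  assert (B1 : Rabs ((N * w - PI) * (d / w)) <= 2 * d).
  { rewrite Rabs_mult, (Rabs_right (d / w)) by (apply Rle_ge, Rlt_le, Rdiv_lt_0_compat; lra).
    assert (Rabs (N * w - PI) <= 5 * PI * w^2 + w) by (apply Rabs_le; lra).
    apply Rle_trans with ((5 * PI * w^2 + w) * (d / w)).
    - apply Rmult_le_compat_r; [apply Rlt_le, Rdiv_lt_0_compat|]; lra.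
    - replace ((5 * PI * w^2 + w) * (d / w)) with ((5 * PI * w + 1) * d) by (field; lra).
      assert (5 * PI * w <= 1) by nra. nra. }
  assert (B2 : Rabs (PI * d * (w0 - w) / (w * w0)) <= 70 * x).
  { assert (0 < w * w0) by nra.
    unfold Rdiv. rewrite Rabs_mult, Rabs_inv, (Rabs_right (w * w0)) by lra.
    rewrite !Rabs_mult, (Rabs_right PI), (Rabs_right d) by lra.
    apply Rmult_le_reg_r with (w * w0); [nra|].
    rewrite Rmult_assoc, Rinv_l, Rmult_1_r by nra.
    assert (Rabs (w0 - w) <= 3 * d * x) by (apply Rabs_le; lra).
    assert (PI * d * Rabs (w0 - w) <= 4 * d * (3 * d * x))
      by (apply Rmult_le_compat; try apply Rabs_pos; nra).
    assert (w * w0 >= 41/100 * d * (43/100 * d)) by nra.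
    nra. }
  eapply Rle_trans; [apply Rabs_triang|]. lra.
Qed.

Lemma n2_lower (s d : R) : 7/10 <= s <= 1 -> 0 < d <= 1/10000 ->
  4 * PI * s - 2 * d <= INR (Defs.nfloor (2 * PI / asin (d / (2 * s)))) * d.
Proof.
  intros Hs Hd. pose proof PI_gt_3. pose proof PI_4.
  set (y := d / (2 * s)).
  assert (Hy : 0 < y <= d).
  { unfold y. split; [apply Rdiv_lt_0_compat; lra|].
    apply Rmult_le_reg_r with (2 * s); [lra|]. field_simplify; nra. }
  destruct (nfloor_div_asin (2 * PI) y ltac:(lra) ltac:(lra)) as [N1 _].
  set (N := INR (Defs.nfloor (2 * PI / asin y))) in *.
  replace (N * d) with (2 * s * (N * y)) by (unfold y; field; lra).
  assert (2 * s * (2 * PI - 5 * (2 * PI) * y^2 - y) <= 2 * s * (N * y))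
    by (apply Rmult_le_compat_l; lra).
  assert (20 * PI * s * y^2 <= d).
  { assert (y * y <= d * (1/10000)) by nra. assert (0 <= PI * s <= 4) by nra.
    replace (20 * PI * s * y^2) with (20 * (PI * s) * (y * y)) by ring. nra. }
  assert (2 * s * y <= d) by (unfold y; right; field; lra).
  nra.
Qed.

Lemma even_part_min_bounds (n1 n2 : nat) : (1 < n1)%nat -> (n1 < n2)%nat ->
  INR n1 - 1 <= INR (Nat.max (2 * (Nat.min n1 n2 / 2)) 1) <= INR n1.
Proof.
  intros H1 H2. rewrite Nat.min_l by lia.
  pose proof (Nat.div_mod n1 2 ltac:(lia)). pose proof (Nat.mod_upper_bound n1 2 ltac:(lia)).
  rewrite Nat.max_l by lia.
  assert (Hlo : (n1 - 1 <= 2 * (n1 / 2))%nat) by lia.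
  assert (Hhi : (2 * (n1 / 2) <= n1)%nat) by lia.
  apply le_INR in Hlo, Hhi. rewrite minus_INR in Hlo by lia. change (INR 1) with 1 in Hlo. lra.
Qed.

Lemma inner_radius_estimate d e : PI/4 <= e <= PI/2 -> 0 < d <= 1/10000 -> 0 < cos e ->
  d / (2 * cos e) <= 1/200 ->
  Rabs (sqrt (d^2 / 4 * / sin e ^ 2 - (cos e / sin e)^2 * sin (PI / (2 * INR (m_fn d e)))^2)
        - sqrt 3 * d / (4 * sin e)) <= 3 * d * (d / (2 * cos e)).
Proof.
  intros He Hd Hc Hx. destruct (hopf_angle_facts e He) as [_ [Hs Hs2]].
  destruct sqrt3_bounds as [E3 _].
  pose proof (m_fn_estimate d e ltac:(lra) Hc Hx) as Hm.
  set (x := d / (2 * cos e)) in *.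
  assert (Hx0 : 0 < x) by (apply Rdiv_lt_0_compat; lra).
  assert (Edx : 2 * cos e * x = d) by (unfold x; field; lra).
  set (sg := sin (PI / (2 * INR (m_fn d e)))).
  pose proof (sin_pi_div_2m_estimate x _ (conj Hx0 Hx) Hm) as Hsg.
  pose proof (hopf_radius_sq_estimate (cos e) (sin e) x sg Hc Hs2 ltac:(lra) Hsg) as HQ.
  rewrite Edx in HQ.
  set (Q := d^2 / 4 * / sin e ^ 2 - (cos e / sin e)^2 * sg^2) in *.
  pose proof (hopf_radius_bounds (sin e) d Hs ltac:(lra)) as Hw0.
  set (w0 := sqrt 3 * d / (4 * sin e)) in *.
  replace (3 * d^2 / (16 * sin e ^ 2)) with (w0^2) in HQ
    by (unfold w0; replace (3 * d^2) with (sqrt 3 * sqrt 3 * d^2) by (rewrite E3; ring);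
        field; lra).
  assert (HQ0 : 0 <= Q).
  { apply Rabs_le_between in HQ.
    assert (d^2 * x <= d^2 * (1/200)) by (apply Rmult_le_compat_l; [apply pow2_ge_0 | lra]).
    assert ((43/100 * d)^2 <= w0^2) by (apply pow_incr; lra). simpl in *. nra. }
  eapply Rle_trans; [apply (sqrt_near_sq Q w0 (d^2 * x)); auto; lra|].
  apply Rmult_le_reg_r with w0; [lra|].
  replace (d^2 * x / w0 * w0) with (d^2 * x) by (field; lra).
  assert (d * x * (3 * w0 - d) >= 0) by (apply Rle_ge, Rmult_le_pos; nra). simpl. nra.
Qed.

Lemma n_fn_estimate d e : PI/4 <= e <= PI/2 -> 0 < d <= 1/10000 -> 0 < cos e ->
  d / (2 * cos e) <= 1/200 ->
  Rabs (INR (n_fn d e) * d - 4 * PI * sin e / sqrt 3) <= 70 * (d / (2 * cos e)) + 3 * d.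
Proof.
  intros He Hd Hc Hx. pose proof PI_gt_3.
  destruct (hopf_angle_facts e He) as [_ [Hs _]].
  pose proof (inner_radius_estimate d e He Hd Hc Hx) as Hw.
  assert (Hx0 : 0 < d / (2 * cos e)) by (apply Rdiv_lt_0_compat; lra).
  pose proof (n1_estimate (sin e) d _ _ Hs Hd (conj Hx0 Hx) Hw) as N1.
  pose proof (n2_lower (sin e) d Hs Hd) as N2.
  unfold n_fn. cbv zeta.
  destruct Rle_dec as [_|h]; [|exfalso; apply h; lra].
  set (n1 := Defs.nfloor (PI / asin (sqrt _))) in *.
  set (n2 := Defs.nfloor (2 * PI / asin (d / (2 * sin e)))) in *.
  apply Rabs_le_between in N1.
  assert (PI * sin e >= 21/10) by nra.
  pose proof (div_sqrt3_bounds (4 * PI * sin e) ltac:(lra)) as Htau.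
  assert (Hlt : (n1 < n2)%nat).
  { apply INR_lt, Rmult_lt_reg_r with d; [lra|]. lra. }
  assert (Hn1 : (1 < n1)%nat).
  { apply INR_lt, Rmult_lt_reg_r with d; [lra|]. simpl. lra. }
  destruct (even_part_min_bounds n1 n2 Hn1 Hlt) as [B1 B2].
  set (n := INR (Nat.max _ 1)) in *.
  assert ((INR n1 - 1) * d <= n * d) by (apply Rmult_le_compat_r; lra).
  assert (n * d <= INR n1 * d) by (apply Rmult_le_compat_r; lra).
  apply Rabs_le. nra.
Qed.

Definition kappa : R := 8 * PI^2 / sqrt 3.

Lemma kappa_bounds : 0 <= kappa <= 80.
Proof.
  pose proof PI_gt_3. pose proof PI_4. unfold kappa.
  assert (0 <= PI^2 <= 16) by (simpl; nra).
  pose proof (div_sqrt3_bounds (8 * PI^2) ltac:(lra)). lra.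
Qed.

Lemma m_fn_times_d_estimate d e : 0 < d -> 0 < cos e -> d / (2 * cos e) <= 1/200 ->
  Rabs (INR (m_fn d e) * d - 2 * PI * cos e) <= 2 * d.
Proof.
  intros Hd Hc Hx. pose proof (m_fn_estimate d e Hd Hc Hx) as Hm.
  set (x := d / (2 * cos e)) in *.
  replace (INR (m_fn d e) * d - 2 * PI * cos e) with (2 * cos e * (INR (m_fn d e) * x - PI))
    by (unfold x; field; lra).
  rewrite Rabs_mult, Rabs_right by lra.
  assert (Rabs (INR (m_fn d e) * x - PI) <= 2 * x) by (apply Rabs_le; lra).
  replace (2 * d) with (2 * cos e * (2 * x)) by (unfold x; field; lra).
  apply Rmult_le_compat_l; lra.
Qed.

Lemma grid_term_regular d e : PI/4 <= e <= PI/2 -> 0 < d <= 1/10000 -> sqrt d <= cos e ->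
  Rabs (INR (m_fn d e) * INR (n_fn d e) * d^2 - kappa * (sin e * cos e)) <= 400 * d.
Proof.
  intros He Hd Hsd. pose proof PI_gt_3. pose proof PI_4.
  destruct (hopf_angle_facts e He) as [Hc [Hs _]].
  assert (Sd : sqrt d * sqrt d = d) by (apply sqrt_sqrt; lra).
  assert (Sd1 : 0 < sqrt d <= 1/100) by (split; [apply sqrt_lt_R0 | ]; nra).
  assert (Hc0 : 0 < cos e) by lra.
  set (x := d / (2 * cos e)).
  assert (Edx : 2 * cos e * x = d) by (unfold x; field; lra).
  assert (Hx : x <= 1/200) by (apply Rmult_le_reg_l with (2 * cos e); nra).
  pose proof (m_fn_times_d_estimate d e ltac:(lra) Hc0 Hx) as Hm.
  pose proof (n_fn_estimate d e He Hd Hc0 Hx) as Hn. fold x in Hn.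
  set (m := INR (m_fn d e)) in *. set (n := INR (n_fn d e)) in *.
  set (tau := 4 * PI * sin e / sqrt 3) in *.
  assert (Htau : 0 <= tau <= 10)
    by (pose proof (div_sqrt3_bounds (4 * PI * sin e) ltac:(nra)); unfold tau; nra).
  replace (m * n * d^2 - kappa * (sin e * cos e))
    with ((m * d - 2 * PI * cos e) * (n * d) + 2 * PI * cos e * (n * d - tau))
    by (unfold tau, kappa; field; destruct sqrt3_bounds; lra).
  apply Rabs_le_between in Hn.
  assert (0 <= n * d <= 12) by (split; [apply Rmult_le_pos; [apply pos_INR | lra] | lra]).
  eapply Rle_trans; [apply Rabs_triang|].
  rewrite (Rabs_mult _ (n * d)), (Rabs_mult (2 * PI * cos e)).
  rewrite (Rabs_right (n * d)), (Rabs_right (2 * PI * cos e)) by nra.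
  assert (Rabs (m * d - 2 * PI * cos e) * (n * d) <= 2 * d * 12)
    by (apply Rmult_le_compat; try lra; apply Rabs_pos).
  assert (Rabs (n * d - tau) <= 70 * x + 3 * d) by (apply Rabs_le; lra).
  assert (Hn2 : 2 * PI * cos e * Rabs (n * d - tau) <= 2 * PI * cos e * (70 * x + 3 * d))
    by (apply Rmult_le_compat_l; nra).
  replace (2 * PI * cos e * (70 * x + 3 * d))
    with (70 * PI * (2 * cos e * x) + 6 * (PI * cos e) * d) in Hn2 by ring.
  rewrite Edx in Hn2.
  assert (PI * d <= 4 * d) by (apply Rmult_le_compat_r; lra).
  assert (PI * cos e * d <= 4 * d) by (apply Rmult_le_compat_r; nra).
  lra.
Qed.

Lemma grid_term_degenerate d e : PI/4 <= e <= PI/2 -> 0 < d <= 2 -> cos e <= sqrt d ->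
  Rabs (INR (m_fn d e) * INR (n_fn d e) * d^2 - kappa * (sin e * cos e)) <= 400 * sqrt d.
Proof.
  intros He Hd Hsd. pose proof PI_gt_3. pose proof PI_4. pose proof kappa_bounds.
  destruct (hopf_angle_facts e He) as [Hc [Hs _]].
  assert (Sd : sqrt d * sqrt d = d) by (apply sqrt_sqrt; lra).
  assert (Sd0 : 0 < sqrt d) by (apply sqrt_lt_R0; lra).
  pose proof (m_fn_upper d e ltac:(lra) ltac:(lra)) as Hm.
  pose proof (n_fn_upper d e Hd ltac:(lra)) as Hn.
  pose proof (pos_INR (m_fn d e)). pose proof (pos_INR (n_fn d e)).
  set (m := INR (m_fn d e)) in *. set (n := INR (n_fn d e)) in *.
  pose proof (le_2_sqrt d ltac:(lra)).
  assert (PI * cos e <= 4 * sqrt d) by (apply Rmult_le_compat; lra).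
  assert (0 <= m * d <= 10 * sqrt d) by (split; [apply Rmult_le_pos|]; lra).
  assert (0 <= n * d <= 18) by (split; [apply Rmult_le_pos|]; lra).
  assert (0 <= m * n * d^2 <= 180 * sqrt d).
  { replace (m * n * d^2) with ((m * d) * (n * d)) by ring.
    split; [apply Rmult_le_pos; lra|].
    replace (180 * sqrt d) with ((10 * sqrt d) * 18) by ring.
    apply Rmult_le_compat; lra. }
  assert (0 <= sin e * cos e <= sqrt d) by (split; nra).
  assert (0 <= kappa * (sin e * cos e) <= 80 * sqrt d)
    by (split; [apply Rmult_le_pos | apply Rmult_le_compat]; lra).
  apply Rabs_le. lra.
Qed.

Lemma grid_term_estimate d e : PI/4 <= e <= PI/2 -> 0 < d <= 1/10000 ->
  Rabs (INR (m_fn d e) * INR (n_fn d e) * d^2 - kappa * (sin e * cos e)) <= 400 * sqrt d.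
Proof.
  intros He Hd. destruct (Rle_or_lt (sqrt d) (cos e)) as [Hr|Hg].
  - assert (d <= sqrt d).
    { assert (sqrt d * sqrt d = d) by (apply sqrt_sqrt; lra).
      assert (0 < sqrt d) by (apply sqrt_lt_R0; lra). nra. }
    pose proof (grid_term_regular d e He Hd Hr). lra.
  - apply grid_term_degenerate; lra.
Qed.

(** * Dimension four *)

Definition sqrt_rate (g : R -> R) (L : R) : Prop :=
  exists K, forall d, 0 < d <= 2 -> Rabs (g d - L) <= K * sqrt d.

Lemma sqrt_rate_of_small (g : R -> R) (L delta K B : R) : 0 < delta ->
  (forall d, 0 < d <= delta -> Rabs (g d - L) <= K * sqrt d) ->
  (forall d, 0 < d <= 2 -> Rabs (g d - L) <= B) -> sqrt_rate g L.
Proof.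
  intros Hdel Hs Hb. exists (Rabs K + Rabs B / sqrt delta). intros d Hd.
  pose proof (sqrt_pos d). assert (0 < sqrt delta) by (apply sqrt_lt_R0; lra).
  assert (0 <= Rabs B / sqrt delta)
    by (apply Rmult_le_pos; [apply Rabs_pos | apply Rlt_le, Rinv_0_lt_compat; lra]).
  pose proof (RRle_abs K). pose proof (RRle_abs B). pose proof (Rabs_pos K).
  destruct (Rle_or_lt d delta) as [Hl|Hg].
  - eapply Rle_trans; [apply Hs; lra|]. apply Rmult_le_compat_r; lra.
  - assert (sqrt delta <= sqrt d) by (apply sqrt_le_1_alt; lra).
    eapply Rle_trans; [apply Hb; lra|].
    assert (Rabs B / sqrt delta * sqrt delta = Rabs B) by (field; lra).
    assert (Rabs B / sqrt delta * sqrt delta <= Rabs B / sqrt delta * sqrt d)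
      by (apply Rmult_le_compat_l; lra).
    assert (Rabs B / sqrt delta * sqrt d <= (Rabs K + Rabs B / sqrt delta) * sqrt d)
      by (apply Rmult_le_compat_r; lra).
    lra.
Qed.

Lemma sqrt_rate_scal c g L : sqrt_rate g L -> sqrt_rate (fun d => c * g d) (c * L).
Proof.
  intros [K HK]. exists (Rabs c * K). intros d Hd.
  rewrite <- Rmult_minus_distr_l, Rabs_mult, Rmult_assoc.
  apply Rmult_le_compat_l; [apply Rabs_pos | auto].
Qed.

Lemma sqrt_rate_filterlim g L : sqrt_rate g L -> filterlim g (at_right 0) (locally L).
Proof.
  intros [K HK]. apply filterlim_locally. intros eps.
  set (K1 := Rabs K + 1). assert (HK1 : 0 < K1) by (unfold K1; pose proof (Rabs_pos K); lra).
  set (t := eps / K1). assert (Ht : 0 < t) by (apply Rdiv_lt_0_compat; [apply cond_pos | lra]).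
  assert (Hd : 0 < Rmin 2 (t * t)) by (apply Rmin_pos; nra).
  exists (mkposreal _ Hd). intros y Hy Hpos. simpl in Hy.
  change (Rabs (y - 0) < Rmin 2 (t * t)) in Hy. rewrite Rminus_0_r, Rabs_right in Hy by lra.
  change (Rabs (g y - L) < eps).
  pose proof (Rmin_l 2 (t * t)). pose proof (Rmin_r 2 (t * t)).
  assert (Sy : sqrt y < t).
  { pose proof (sqrt_sqrt y ltac:(lra)). pose proof (sqrt_pos y). nra. }
  pose proof (sqrt_pos y). pose proof (RRle_abs K).
  assert (K * sqrt y <= K1 * sqrt y) by (apply Rmult_le_compat_r; unfold K1; lra).
  assert (K1 * sqrt y < K1 * t) by (apply Rmult_lt_compat_l; lra).
  replace (K1 * t) with (pos eps) in * by (unfold t; field; lra).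
  pose proof (HK y ltac:(lra)). lra.
Qed.

Lemma Mr_0 d : 0 < d <= 2 -> Mr 0 (Finite d) = M4 d.
Proof. intros Hd. simpl. destruct Rlt_dec; [|lra]. destruct Rle_dec; [reflexivity|lra]. Qed.

Lemma Mr_S j d : 0 < d <= 2 ->
  Mr (S j) (Finite d) =
  nsum (map (fun l => Mr j (divR d (cos (PI/4 + (INR l - INR (t_par d / 2)) * delta_eta d)))
                      * Mr j (divR d (sin (PI/4 + (INR l - INR (t_par d / 2)) * delta_eta d))))%nat
            (seq 0 (2 * (t_par d / 2) + 1))).
Proof. intros Hd. simpl Mr at 1. destruct Rlt_dec; [|lra]. destruct Rle_dec; [reflexivity|lra]. Qed.

Lemma divR_pos d r : 0 < r -> divR d r = Finite (d / r).
Proof. intros. unfold divR. destruct Req_EM_T; [lra | reflexivity]. Qed.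

Lemma Mr_divR_degenerate j d r : r = 0 \/ 2 < d / r -> Mr j (divR d r) = 1%nat.
Proof.
  intros Hr. unfold divR. destruct Req_EM_T as [_|Hne]; [destruct j; reflexivity|].
  destruct Hr as [Hr|Hr]; [contradiction|].
  destruct j; simpl; destruct Rlt_dec; auto; destruct Rle_dec; auto; lra.
Qed.

Definition grid_count (d : R) (i : nat) : R :=
  INR (m_fn d (PI/4 + INR i * delta_eta d)) * INR (n_fn d (PI/4 + INR i * delta_eta d)).

Lemma M4_half_grid_sum d : INR (M4 d) = half_grid_sum (t_par d / 2) (grid_count d).
Proof.
  unfold M4, half_grid_sum, grid_count. cbv zeta.
  rewrite plus_INR, !mult_INR, INR_nsum_map. f_equal. f_equal.
  apply sumR_ext. intros i _. apply mult_INR.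
Qed.

Lemma half_grid_sum_scal T a phi : half_grid_sum T (fun i => a * phi i) = a * half_grid_sum T phi.
Proof. unfold half_grid_sum. rewrite sumR_scal. ring. Qed.

Lemma grid_size_bound d : 0 < d <= 2 -> (2 * INR (t_par d / 2) + 1) * d <= 4.
Proof.
  intros Hd. destruct (delta_eta_bounds d Hd) as [Hh _]. pose proof (half_count_bounds d Hd).
  pose proof (pos_INR (t_par d / 2)). pose proof PI_4.
  assert (INR (t_par d / 2) * d <= INR (t_par d / 2) * delta_eta d)
    by (apply Rmult_le_compat_l; lra).
  lra.
Qed.

Lemma half_grid_angle_range d i : 0 < d <= 2 -> (i <= t_par d / 2)%nat ->
  PI/4 <= PI/4 + INR i * delta_eta d <= PI/2.
Proof.
  intros Hd Hi. destruct (delta_eta_bounds d Hd) as [Hh _].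
  pose proof (half_count_bounds d Hd).
  apply le_INR in Hi. pose proof (pos_INR i).
  assert (INR i * delta_eta d <= INR (t_par d / 2) * delta_eta d)
    by (apply Rmult_le_compat_r; lra).
  split; [nra | lra].
Qed.

Lemma grid_count_bound d i : 0 < d <= 2 -> (i <= t_par d / 2)%nat ->
  0 <= grid_count d i * d^2 <= 180.
Proof.
  intros Hd Hi. pose proof (half_grid_angle_range d i Hd Hi) as He.
  destruct (hopf_angle_facts _ He) as [Hc [Hs _]].
  set (e := PI/4 + INR i * delta_eta d) in *.
  pose proof (m_fn_upper d e ltac:(lra) ltac:(lra)) as Hm.
  pose proof (n_fn_upper d e Hd ltac:(lra)) as Hn.
  unfold grid_count. fold e. set (m := INR (m_fn _ _)) in *. set (n := INR (n_fn _ _)) in *.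
  pose proof PI_4. pose proof PI_gt_3.
  assert (0 <= m) by apply pos_INR. assert (0 <= n) by apply pos_INR.
  assert (PI * cos e <= 4) by nra.
  assert (0 <= m * d <= 10) by (split; [apply Rmult_le_pos|]; lra).
  assert (0 <= n * d <= 18) by (split; [apply Rmult_le_pos|]; lra).
  replace (m * n * d^2) with ((m * d) * (n * d)) by ring.
  split; [apply Rmult_le_pos; lra|].
  replace 180 with (10 * 18) by ring. apply Rmult_le_compat; lra.
Qed.

Lemma M4_cube_bound d : 0 < d <= 2 -> Rabs (INR (M4 d) * d^3 - kappa / 2) <= 760.
Proof.
  intros Hd. pose proof kappa_bounds. pose proof (grid_size_bound d Hd).
  set (T := (t_par d / 2)%nat) in *.
  assert (HH : Rabs (half_grid_sum T (fun i => d^2 * grid_count d i)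
                     - half_grid_sum T (fun i => 0 * grid_count d i)) <= (2 * INR T + 1) * 180).
  { apply half_grid_sum_dist. intros i Hi. rewrite Rmult_0_l, Rminus_0_r.
    pose proof (grid_count_bound d i Hd Hi). rewrite Rabs_right; lra. }
  rewrite !half_grid_sum_scal, Rmult_0_l, Rminus_0_r in HH.
  replace (INR (M4 d) * d^3) with (d * (d^2 * half_grid_sum T (grid_count d)))
    by (rewrite M4_half_grid_sum; fold T; ring).
  assert (Rabs (d * (d^2 * half_grid_sum T (grid_count d))) <= 720).
  { rewrite Rabs_mult, (Rabs_right d) by lra.
    apply Rle_trans with (d * ((2 * INR T + 1) * 180)); [apply Rmult_le_compat_l; lra | nra]. }
  unfold Rminus. eapply Rle_trans; [apply Rabs_triang|].
  rewrite Rabs_Ropp, (Rabs_right (kappa / 2)); lra.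
Qed.

Lemma M4_cube_rate_small : exists K, forall d, 0 < d <= 1/10000 ->
  Rabs (INR (M4 d) * d^3 - kappa / 2) <= K * sqrt d.
Proof.
  destruct half_grid_riemann as [K2 HK2].
  exists (4 * 400 + 80 * Rabs K2). intros d Hd.
  pose proof kappa_bounds. pose proof (grid_size_bound d ltac:(lra)).
  pose proof (HK2 d ltac:(lra)) as R2.
  assert (Sd : 0 < sqrt d) by (apply sqrt_lt_R0; lra).
  assert (Hdsd : d <= sqrt d).
  { pose proof (sqrt_sqrt d ltac:(lra)). assert (sqrt d <= 1) by nra. nra. }
  set (T := (t_par d / 2)%nat) in *. set (h := delta_eta d) in *.
  set (f := fun i => sc_pow 0 (PI/4 + INR i * h)) in *.
  assert (HG : Rabs (half_grid_sum T (fun i => d^2 * grid_count d i)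
                     - half_grid_sum T (fun i => kappa * f i)) <= (2 * INR T + 1) * (400 * sqrt d)).
  { apply half_grid_sum_dist. intros i Hi. unfold f, grid_count. fold h.
    rewrite sc_pow_0, (Rmult_comm (d^2)).
    apply grid_term_estimate; [apply half_grid_angle_range; [lra | exact Hi] | lra]. }
  rewrite !half_grid_sum_scal in HG.
  replace (INR (M4 d) * d^3 - kappa / 2)
    with (d * (d^2 * half_grid_sum T (grid_count d) - kappa * half_grid_sum T f)
          + kappa * (d * half_grid_sum T f - 1/2))
    by (rewrite M4_half_grid_sum; fold T; field).
  eapply Rle_trans; [apply Rabs_triang|].
  rewrite !Rabs_mult, (Rabs_right d), (Rabs_right kappa) by lra.
  assert (d * Rabs (d^2 * half_grid_sum T (grid_count d) - kappa * half_grid_sum T f)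
          <= 4 * 400 * sqrt d).
  { apply Rle_trans with (d * ((2 * INR T + 1) * (400 * sqrt d))).
    - apply Rmult_le_compat_l; lra.
    - replace (d * ((2 * INR T + 1) * (400 * sqrt d))) with (((2 * INR T + 1) * d) * (400 * sqrt d))
        by ring.
      replace (4 * 400 * sqrt d) with (4 * (400 * sqrt d)) by ring.
      apply Rmult_le_compat_r; lra. }
  assert (kappa * Rabs (d * half_grid_sum T f - 1/2) <= 80 * Rabs K2 * sqrt d).
  { pose proof (RRle_abs K2). pose proof (Rabs_pos K2).
    assert (K2 * d <= Rabs K2 * d) by (apply Rmult_le_compat_r; lra).
    assert (Rabs K2 * d <= Rabs K2 * sqrt d) by (apply Rmult_le_compat_l; lra).
    apply Rle_trans with (kappa * (Rabs K2 * sqrt d)); [apply Rmult_le_compat_l; lra|].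
    rewrite <- Rmult_assoc. apply Rmult_le_compat_r; [lra|].
    apply Rmult_le_compat_r; [apply Rabs_pos | lra]. }
  lra.
Qed.

Lemma Mr_rate_base : sqrt_rate (fun d => INR (Mr 0 (Finite d)) * d^3) (kappa / 2).
Proof.
  destruct M4_cube_rate_small as [K HK].
  apply (sqrt_rate_of_small _ _ (1/10000) K 760); [lra| |].
  - intros d Hd. rewrite Mr_0 by lra. apply HK, Hd.
  - intros d Hd. rewrite Mr_0 by exact Hd. apply M4_cube_bound, Hd.
Qed.

(** * The recursive step *)

Lemma pow_le1 r n : 0 <= r <= 1 -> r^n <= 1.
Proof. intros Hr. rewrite <- (pow1 n). apply pow_incr. lra. Qed.

Lemma pow_le_sqrt d p : 0 < d <= 2 -> (1 <= p)%nat -> d^p <= 2^p * sqrt d.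
Proof.
  intros Hd Hp. destruct p as [|p]; [lia|]. simpl.
  assert (d^p <= 2^p) by (apply pow_incr; lra).
  pose proof (le_2_sqrt d ltac:(lra)). pose proof (pow_le d p ltac:(lra)). pose proof (sqrt_pos d).
  apply Rle_trans with ((2 * sqrt d) * 2^p); [apply Rmult_le_compat; lra | lra].
Qed.

Lemma pow_sqrt_div_le r d p : 0 < r <= 1 -> 0 < d -> (1 <= p)%nat -> r^p * sqrt (d / r) <= sqrt d.
Proof.
  intros Hr Hd Hp. destruct p as [|p]; [lia|].
  assert (Hrp : r^S p <= r) by (simpl; pose proof (pow_le1 r p); pose proof (pow_le r p); nra).
  assert (Hsr : sqrt r * sqrt r = r) by (apply sqrt_sqrt; lra).
  assert (0 < sqrt r) by (apply sqrt_lt_R0; lra).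
  rewrite sqrt_div_alt by lra.
  replace (r^S p * (sqrt d / sqrt r)) with (sqrt d * (r^S p / sqrt r)) by (field; lra).
  rewrite <- (Rmult_1_r (sqrt d)) at 2. apply Rmult_le_compat_l; [apply sqrt_pos|].
  apply Rmult_le_reg_r with (sqrt r); [lra|].
  replace (r^S p / sqrt r * sqrt r) with (r^S p) by (field; lra). nra.
Qed.

Lemma full_grid_angle_range d l : 0 < d <= 2 -> (l <= 2 * (t_par d / 2))%nat ->
  0 <= cos (PI/4 + (INR l - INR (t_par d / 2)) * delta_eta d) <= 1 /\
  0 <= sin (PI/4 + (INR l - INR (t_par d / 2)) * delta_eta d) <= 1.
Proof.
  intros Hd Hl. destruct (delta_eta_bounds d Hd) as [Hh _]. pose proof (half_count_bounds d Hd).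
  apply le_INR in Hl. rewrite mult_INR in Hl. change (INR 2) with 2 in Hl.
  pose proof (pos_INR l). pose proof PI_gt_3.
  set (T := (t_par d / 2)%nat) in *. set (h := delta_eta d) in *.
  set (e := PI/4 + (INR l - INR T) * h).
  assert (- (INR T * h) <= (INR l - INR T) * h <= INR T * h) by (split; nra).
  pose proof (SIN_bound e). pose proof (COS_bound e).
  split; split; try lra; [apply cos_ge_0 | apply sin_ge_0]; unfold e; lra.
Qed.

Section Recursion.

Variables (j p : nat) (A K : R).
Hypothesis Hp : (1 <= p)%nat.
Hypothesis HR : forall y, 0 < y <= 2 -> Rabs (INR (Mr j (Finite y)) * y^p - A) <= K * sqrt y.

Lemma rate_const_nonneg : 0 <= K.
Proof.
  pose proof (HR 1 ltac:(lra)) as H1. rewrite sqrt_1 in H1.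
  pose proof (Rabs_pos (INR (Mr j 1) * 1 ^ p - A)). lra.
Qed.

Lemma Mr_factor_degenerate d r : 0 < d <= 2 -> 0 <= r <= d -> r = 0 \/ 2 < d / r ->
  Rabs (d^p * INR (Mr j (divR d r)) - A * r^p) <= (1 + Rabs A) * 2^p * sqrt d.
Proof.
  intros Hd Hr Hdeg. rewrite Mr_divR_degenerate by exact Hdeg.
  change (INR 1) with 1. rewrite Rmult_1_r.
  assert (0 <= r^p <= d^p) by (split; [apply pow_le | apply pow_incr]; lra).
  pose proof (pow_le_sqrt d p Hd Hp). pose proof (Rabs_pos A).
  unfold Rminus. eapply Rle_trans; [apply Rabs_triang|].
  rewrite Rabs_Ropp, Rabs_mult, (Rabs_right (d^p)), (Rabs_right (r^p)) by lra.
  assert (Rabs A * r^p <= Rabs A * d^p) by (apply Rmult_le_compat_l; lra).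
  assert ((1 + Rabs A) * d^p <= (1 + Rabs A) * (2^p * sqrt d)) by (apply Rmult_le_compat_l; lra).
  lra.
Qed.

Lemma Mr_factor_regular d r : 0 < d -> 0 < r <= 1 -> d / r <= 2 ->
  Rabs (d^p * INR (Mr j (divR d r)) - A * r^p) <= K * sqrt d.
Proof.
  intros Hd Hr Hg. rewrite divR_pos by lra.
  assert (0 < d / r) by (apply Rdiv_lt_0_compat; lra).
  pose proof (HR (d / r) ltac:(lra)) as HM.
  replace (d^p * INR (Mr j (d / r)) - A * r^p)
    with (r^p * (INR (Mr j (d / r)) * (d / r)^p - A))
    by (unfold Rdiv; rewrite Rpow_mult_distr, pow_inv; field; apply pow_nonzero; lra).
  pose proof (pow_lt r p ltac:(lra)). pose proof rate_const_nonneg.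
  rewrite Rabs_mult, (Rabs_right (r^p)) by lra.
  apply Rle_trans with (r^p * (K * sqrt (d / r))); [apply Rmult_le_compat_l; lra|].
  replace (r^p * (K * sqrt (d / r))) with (K * (r^p * sqrt (d / r))) by ring.
  apply Rmult_le_compat_l; [lra | apply pow_sqrt_div_le; [lra | lra | exact Hp]].
Qed.

Let C := K + (1 + Rabs A) * 2^p.

Lemma factor_const_nonneg : 0 <= C.
Proof.
  unfold C. pose proof rate_const_nonneg. pose proof (Rabs_pos A).
  pose proof (pow_le 2 p ltac:(lra)). nra.
Qed.

Lemma Mr_factor_estimate d r : 0 < d <= 2 -> 0 <= r <= 1 ->
  Rabs (d^p * INR (Mr j (divR d r)) - A * r^p) <= C * sqrt d.
Proof.
  intros Hd Hr. pose proof rate_const_nonneg. pose proof (Rabs_pos A). pose proof (sqrt_pos d).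
  assert (0 <= (1 + Rabs A) * 2^p) by (apply Rmult_le_pos; [lra | apply pow_le; lra]).
  assert (K * sqrt d <= C * sqrt d) by (apply Rmult_le_compat_r; unfold C; lra).
  assert ((1 + Rabs A) * 2^p * sqrt d <= C * sqrt d) by (apply Rmult_le_compat_r; unfold C; lra).
  destruct (Rle_or_lt r 0) as [Hr0|Hr0].
  - assert (r = 0) by lra. pose proof (Mr_factor_degenerate d r Hd ltac:(lra) (or_introl H5)). lra.
  - destruct (Rle_or_lt (d / r) 2) as [Hg|Hb].
    + pose proof (Mr_factor_regular d r ltac:(lra) ltac:(lra) Hg). lra.
    + assert (r <= d).
      { apply Rmult_lt_compat_r with (r := r) in Hb; [|lra].
        replace (d / r * r) with d in Hb by (field; lra). lra. }
      pose proof (Mr_factor_degenerate d r Hd ltac:(lra) (or_intror Hb)). lra.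
Qed.

Lemma Mr_product_estimate d r1 r2 : 0 < d <= 2 -> 0 <= r1 <= 1 -> 0 <= r2 <= 1 ->
  Rabs (d^(2*p+1) * (INR (Mr j (divR d r1)) * INR (Mr j (divR d r2))) - d * A^2 * (r1 * r2)^p)
  <= 2 * C * (Rabs A + C) * (d * sqrt d).
Proof.
  intros Hd H1 H2.
  pose proof (Mr_factor_estimate d r1 Hd H1) as F1.
  pose proof (Mr_factor_estimate d r2 Hd H2) as F2.
  set (X1 := d^p * INR (Mr j (divR d r1))) in *. set (X2 := d^p * INR (Mr j (divR d r2))) in *.
  set (Y1 := A * r1^p) in *. set (Y2 := A * r2^p) in *.
  replace (d^(2*p+1) * (INR (Mr j (divR d r1)) * INR (Mr j (divR d r2))) - d * A^2 * (r1 * r2)^p)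
    with (d * ((X1 - Y1) * X2 + Y1 * (X2 - Y2)))
    by (unfold X1, X2, Y1, Y2; replace (2*p+1)%nat with (1 + p + p)%nat by lia;
        rewrite !pow_add, Rpow_mult_distr; ring).
  pose proof rate_const_nonneg. pose proof (Rabs_pos A). pose proof (sqrt_pos d).
  pose proof factor_const_nonneg as HC.
  assert (Hsd : sqrt d <= 2) by (pose proof (sqrt_sqrt d ltac:(lra)); nra).
  assert (HY : forall r, 0 <= r <= 1 -> Rabs (A * r^p) <= Rabs A).
  { intros r Hr. rewrite Rabs_mult, (Rabs_right (r^p)) by (apply Rle_ge, pow_le; lra).
    pose proof (pow_le1 r p Hr). pose proof (pow_le r p ltac:(lra)). nra. }
  assert (HX2 : Rabs X2 <= Rabs A + 2 * C).
  { replace X2 with (Y2 + (X2 - Y2)) by ring. eapply Rle_trans; [apply Rabs_triang|].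
    pose proof (HY r2 H2) as HY2. fold Y2 in HY2.
    assert (C * sqrt d <= C * 2) by (apply Rmult_le_compat_l; lra). lra. }
  rewrite Rabs_mult, (Rabs_right d) by lra.
  replace (2 * C * (Rabs A + C) * (d * sqrt d)) with (d * (2 * C * (Rabs A + C) * sqrt d)) by ring.
  apply Rmult_le_compat_l; [lra|].
  eapply Rle_trans; [apply Rabs_triang|]. rewrite !Rabs_mult.
  assert (Rabs (X1 - Y1) * Rabs X2 <= C * sqrt d * (Rabs A + 2 * C))
    by (apply Rmult_le_compat; try apply Rabs_pos; lra).
  assert (Rabs Y1 * Rabs (X2 - Y2) <= Rabs A * (C * sqrt d))
    by (apply Rmult_le_compat; [apply Rabs_pos | apply Rabs_pos | apply (HY r1 H1) | exact F2]).
  lra.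
Qed.

Lemma Mr_succ_grid_estimate d : 0 < d <= 2 ->
  Rabs (INR (Mr (S j) (Finite d)) * d^(2*p+1)
        - d * A^2 * sumR (fun l => (cos (PI/4 + (INR l - INR (t_par d / 2)) * delta_eta d)
                                    * sin (PI/4 + (INR l - INR (t_par d / 2)) * delta_eta d))^p)
                         (seq 0 (2 * (t_par d / 2) + 1)))
  <= 4 * (2 * C * (Rabs A + C)) * sqrt d.
Proof.
  intros Hd. pose proof (grid_size_bound d Hd) as HN.
  rewrite Mr_S by exact Hd. rewrite INR_nsum_map, (Rmult_comm (sumR _ _)), <- !sumR_scal.
  set (T := (t_par d / 2)%nat) in *. set (C2 := 2 * C * (Rabs A + C)).
  assert (HC2 : 0 <= C2).
  { unfold C2. pose proof factor_const_nonneg. pose proof (Rabs_pos A).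
    apply Rmult_le_pos; lra. }
  eapply Rle_trans.
  - apply (sumR_dist _ _ _ (C2 * (d * sqrt d))). intros l Hl. apply in_seq in Hl.
    destruct (full_grid_angle_range d l Hd ltac:(fold T; lia)) as [Hc Hs].
    rewrite mult_INR. apply Mr_product_estimate; auto.
  - rewrite length_seq, plus_INR, mult_INR. change (INR 2) with 2. pose proof (sqrt_pos d).
    replace ((2 * INR T + INR 1) * (C2 * (d * sqrt d))) with (((2 * INR T + 1) * d) * (C2 * sqrt d))
      by (simpl; ring).
    replace (4 * C2 * sqrt d) with (4 * (C2 * sqrt d)) by ring.
    apply Rmult_le_compat_r; [apply Rmult_le_pos|]; lra.
Qed.

Lemma Mr_rate_succ q : p = (2*q+1)%nat ->
  sqrt_rate (fun d => INR (Mr (S j) (Finite d)) * d^(2*p+1)) (A^2 * sc_pow_int q).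
Proof.
  intros Ep. destruct (full_grid_riemann q) as [KR HKR].
  exists (4 * (2 * C * (Rabs A + C)) + 2 * A^2 * Rabs KR). intros d Hd.
  pose proof (Mr_succ_grid_estimate d Hd) as HX.
  pose proof (HKR d Hd) as RF.
  set (Sf := sumR _ (seq 0 (2 * (t_par d / 2) + 1))) in RF.
  replace (sumR _ (seq 0 (2 * (t_par d / 2) + 1))) with Sf in HX
    by (apply sumR_ext; intros; unfold sc_pow; rewrite <- Ep; f_equal; ring).
  assert (HY : Rabs (d * A^2 * Sf - A^2 * sc_pow_int q) <= 2 * A^2 * Rabs KR * sqrt d).
  { replace (d * A^2 * Sf - A^2 * sc_pow_int q) with (A^2 * (d * Sf - sc_pow_int q)) by ring.
    pose proof (pow2_ge_0 A). pose proof (le_2_sqrt d ltac:(lra)). pose proof (RRle_abs KR).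
    pose proof (Rabs_pos KR).
    rewrite Rabs_mult, (Rabs_right (A^2)) by lra.
    assert (KR * d <= Rabs KR * d) by (apply Rmult_le_compat_r; lra).
    assert (Rabs KR * d <= Rabs KR * (2 * sqrt d)) by (apply Rmult_le_compat_l; lra).
    replace (2 * A^2 * Rabs KR * sqrt d) with (A^2 * (Rabs KR * (2 * sqrt d))) by ring.
    apply Rmult_le_compat_l; lra. }
  set (X := INR (Mr (S j) (Finite d)) * d^(2*p+1)) in *.
  replace (X - A^2 * sc_pow_int q) with ((X - d * A^2 * Sf) + (d * A^2 * Sf - A^2 * sc_pow_int q))
    by ring.
  eapply Rle_trans; [apply Rabs_triang|]. lra.
Qed.

End Recursion.

(** * The limit constant *)

Definition sphere_dim (j : nat) : nat := (2^(j+2) - 1)%nat.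

Fixpoint limit_const (j : nat) : R :=
  match j with
  | O => kappa / 2
  | S j' => limit_const j' ^ 2 * sc_pow_int (2^(j'+1) - 1)
  end.

Lemma pow2_ge_1 n : (1 <= 2^n)%nat.
Proof. induction n; simpl; lia. Qed.

Lemma sphere_dim_odd j : sphere_dim j = (2 * (2^(j+1) - 1) + 1)%nat.
Proof.
  unfold sphere_dim. replace (j+2)%nat with (S (j+1)) by lia. rewrite Nat.pow_succ_r'.
  pose proof (pow2_ge_1 (j+1)). lia.
Qed.

Lemma sphere_dim_S j : sphere_dim (S j) = (2 * sphere_dim j + 1)%nat.
Proof.
  unfold sphere_dim. replace (S j + 2)%nat with (S (j+2)) by lia. rewrite Nat.pow_succ_r'.
  pose proof (pow2_ge_1 (j+2)). lia.
Qed.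

Lemma Mr_rate j :
  sqrt_rate (fun d => INR (Mr j (Finite d)) * d^(sphere_dim j)) (limit_const j).
Proof.
  induction j as [|j [K HK]].
  - exact Mr_rate_base.
  - rewrite sphere_dim_S.
    apply (Mr_rate_succ j (sphere_dim j) (limit_const j) K); [|exact HK | apply sphere_dim_odd].
    rewrite sphere_dim_odd. lia.
Qed.

Definition center_density (j : nat) : R :=
  Rpower 2 (1 - 3 * INR (2^j)) * Rpower 3 (- Rpower 2 (INR j - 1)).

Lemma center_density_S j : center_density (S j) = center_density j ^ 2 / 2.
Proof.
  unfold center_density.
  assert (R21 : Rpower 2 1 = 2) by (apply Rpower_1; lra).
  replace (1 - 3 * INR (2 ^ S j)) with ((1 - 3 * INR (2^j)) + (1 - 3 * INR (2^j)) + - (1))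
    by (rewrite Nat.pow_succ_r', mult_INR; simpl; ring).
  replace (INR (S j) - 1) with ((INR j - 1) + 1) by (rewrite S_INR; ring).
  rewrite !Rpower_plus, R21, Rpower_Ropp, R21.
  replace (- (Rpower 2 (INR j - 1) * 2)) with (- Rpower 2 (INR j - 1) + - Rpower 2 (INR j - 1))
    by ring.
  rewrite Rpower_plus. field.
Qed.

Lemma sphere_area_sq_wallis r :
  sphere_area_even (2 * S r) ^ 2 * wallis r = sphere_area_even (4 * S r) * 2^(2 * S r).
Proof.
  unfold sphere_area_even.
  replace (2 * S r / 2)%nat with (S r) by (rewrite Nat.mul_comm, Nat.div_mul; lia).
  replace (4 * S r / 2)%nat with (2 * S r)%nat
    by (replace (4 * S r)%nat with (2 * S r * 2)%nat by lia; rewrite Nat.div_mul; lia).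
  rewrite wallis_closed.
  replace (fact (2 * S r)) with (S (2*r+1) * fact (2*r+1))%nat
    by (replace (2 * S r)%nat with (S (2*r+1)) by lia; reflexivity).
  replace (PI ^ (2 * S r)) with ((PI ^ S r)^2) by (rewrite <- pow_mult; f_equal; lia).
  replace (2 ^ (2 * S r)) with (4 * 4^r)
    by (rewrite pow_mult; replace (2^2) with 4 by ring; reflexivity).
  rewrite !INR_fact_S, !mult_INR, !S_INR, !plus_INR, !mult_INR. simpl.
  pose proof (INR_fact_neq_0 r). pose proof (INR_fact_neq_0 (2*r+1)). pose proof (pos_INR r).
  field. repeat split; auto; lra.
Qed.

Lemma limit_const_closed j :
  limit_const j = center_density j * sphere_area_even (2^(j+2)) * 2^(sphere_dim j).
Proof.
  induction j as [|j IH].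
  - simpl limit_const.
    replace (sphere_area_even (2^(0+2))) with (2 * PI^2) by (unfold sphere_area_even; simpl; field).
    replace (2 ^ sphere_dim 0) with 8 by (unfold sphere_dim; simpl; ring).
    unfold center_density. change (INR (2^0)) with 1. change (INR 0) with 0.
    replace (1 - 3 * 1) with (- INR 2) by (simpl; ring). replace (0 - 1) with (- (1)) by ring.
    rewrite !Rpower_Ropp, Rpower_pow, Rpower_1, Rpower_sqrt by lra.
    unfold kappa. assert (0 < sqrt 3) by (apply sqrt_lt_R0; lra). simpl. field. lra.
  - change (limit_const (S j)) with (limit_const j ^ 2 * sc_pow_int (2^(j+1) - 1)).
    rewrite IH, center_density_S.
    set (r := (2^(j+1) - 1)%nat).
    assert (E1 : (2^(j+2) = 2 * S r)%nat).
    { unfold r. replace (j+2)%nat with (S (j+1)) by lia. rewrite Nat.pow_succ_r'.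
      pose proof (pow2_ge_1 (j+1)). lia. }
    assert (E2 : (2^(S j + 2) = 4 * S r)%nat).
    { replace (S j + 2)%nat with (S (j+2)) by lia. rewrite Nat.pow_succ_r', E1. lia. }
    assert (E3 : sphere_dim j = (2 * r + 1)%nat) by apply sphere_dim_odd.
    rewrite sphere_dim_S, E1, E2, E3. unfold sc_pow_int. fold r.
    pose proof (sphere_area_sq_wallis r) as W.
    set (X := 2 ^ (2 * r + 1)).
    replace (2 ^ (2 * S r)) with (2 * X) in W
      by (unfold X; replace (2 * S r)%nat with (S (2*r+1)) by lia; reflexivity).
    replace (2 ^ (2 * r + 2)) with (2 * X)
      by (unfold X; replace (2*r+2)%nat with (S (2*r+1)) by lia; reflexivity).
    replace (2 ^ (2 * (2 * r + 1) + 1)) with (2 * X^2)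
      by (unfold X; rewrite <- pow_mult;
          replace (2 * (2 * r + 1) + 1)%nat with ((2 * r + 1) * 2 + 1)%nat by lia;
          rewrite pow_add; ring).
    assert (0 < X) by (apply pow_lt; lra).
    set (S2 := sphere_area_even (2 * S r)) in *. set (S4 := sphere_area_even (4 * S r)) in *.
    replace ((center_density j * S2 * X) ^ 2 * (wallis r / (2 * X)))
      with (center_density j ^ 2 * X * (S2 ^ 2 * wallis r) / 2) by (field; lra).
    rewrite W. field.
Qed.

Lemma sphere_area_pos n : (1 <= n)%nat -> 0 < sphere_area_even n.
Proof.
  intros Hn. unfold sphere_area_even. pose proof PI_gt_3.
  apply Rmult_lt_0_compat; [apply Rmult_lt_0_compat|].
  - apply lt_0_INR. lia.
  - apply pow_lt. lra.
  - apply Rinv_0_lt_compat, INR_fact_lt_0.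
Qed.

Theorem corollary2 (k : nat) (hk : (2 <= k)%nat) :
  filterlim
    (fun d : R => INR (M_SCHF k d) / sphere_area_even (2 ^ k) * (d / 2) ^ (2 ^ k - 1))
    (at_right 0)
    (locally (Rpower 2 (1 - 3 * INR (2 ^ (k - 2))) * Rpower 3 (- Rpower 2 (INR k - 3)))).
Proof.
  set (j := (k - 2)%nat). assert (Ek : k = (j + 2)%nat) by lia.
  replace (INR k - 3) with (INR j - 1) by (rewrite Ek, plus_INR; simpl; ring).
  fold (center_density j).
  replace (2 ^ k - 1)%nat with (sphere_dim j) by (rewrite Ek; reflexivity).
  rewrite Ek. set (c := / (sphere_area_even (2^(j+2)) * 2^(sphere_dim j))).
  assert (HS : 0 < sphere_area_even (2^(j+2))) by (apply sphere_area_pos, pow2_ge_1).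
  assert (HX : 0 < 2^(sphere_dim j)) by (apply pow_lt; lra).
  apply (filterlim_ext (fun d => c * (INR (Mr j (Finite d)) * d^(sphere_dim j)))).
  { intro d. unfold c, M_SCHF, Rdiv. replace (j + 2 - 2)%nat with j by lia.
    rewrite Rpow_mult_distr, pow_inv. field. split; lra. }
  replace (center_density j) with (c * limit_const j)
    by (unfold c; rewrite limit_const_closed; field; split; lra).
  apply sqrt_rate_filterlim, sqrt_rate_scal, Mr_rate.
Qed.
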